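(* Let $\mathcal{C}$ be a category and $W$ a class of morphisms of $\mathcal{C}$ containing all identities, and regard $(N\mathcal{C}, W)$ as a marked simplicial set (the nerve $N\mathcal{C}$ marked at the $1$-simplices lying in $W$). (1) $(\mathcal{C}, W)$ satisfies proper calculus of left fractions if and only if $(N\mathcal{C}, W)$ satisfies calculus of left fractions (CLF). (2) $(\mathcal{C}, W)$ satisfies proper calculus of right fractions if and only if $(N\mathcal{C}, W)$ satisfies calculus of right fractions (CRF).
   Context: A marked simplicial set is a pair $(X,W)$ where $X$ is a simplicial set and $W \subseteq X_1$ contains all degenerate $1$-simplices; marked maps preserve marked $1$-simplices. Posets are regarded as simplicial sets via the nerve; $[n]=\{0<1<\dots<n\}$. Marked posets $\mathrm{L}^n_k$, $\mathrm{LJ}^n_k$, $\mathrm{R}^n_k$, $\mathrm{RJ}^n_k$: for $n\ge 0$, $0\le k\le n$, $\mathrm{L}^n_k$ is the nerve of the poset of subsets $A\subseteq[n]$ with $k\in A$, ordered by inclusion, where a $1$-simplex $A_0\subseteq A_1$ is marked iff $\max A_0=\max A_1$; $\mathrm{LJ}^n_k\subseteq \mathrm{L}^n_k$ is the maximal simplicial subset not containing the vertex $[n]$ (with the induced marking). $\mathrm{R}^n_k$ is the nerve of the opposite poset (same subsets, arrows $A_0\to A_1$ when $A_0\supseteq A_1$), where $A_0\supseteq A_1$ is marked iff $\min A_0=\min A_1$; $\mathrm{RJ}^n_k\subseteq\mathrm{R}^n_k$ is the maximal simplicial subset omitting the vertex $[n]$. A marking $W$ on $X$ is weakly closed under composition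 if every map $\Lambda^2_1\to X$ whose two $1$-simplices are marked extends to a $2$-simplex $\Delta^2\to X$ all of whose edges are marked. A marked quasicategory $(\mathcal{C},W)$ satisfies CLF if $W$ is weakly closed under composition and $(\mathcal{C},W)$ has the right lifting property (in marked simplicial sets) against all inclusions $\mathrm{LJ}^n_k\hookrightarrow\mathrm{L}^n_k$ with $n\ge2$, $0<k\le n$; it satisfies CRF if $W$ is weakly closed under composition and it has the right lifting property against all $\mathrm{RJ}^n_k\hookrightarrow\mathrm{R}^n_k$ with $n\ge 2$, $0\le k<n$. A marked category $(\mathcal{C},W)$ satisfies proper calculus of left fractions if: (i) $W$ is closed under composition and contains identities; (ii') every span $f\colon X\to Y$, $w\colon X\to X'$ with $w\in W$ can be completed to a commutative square $f'w=w'f$ with $f'\colon X'\to Y'$, $w'\colon Y\to Y'$, $w'\in W$, and moreover if $f\in W$ then $f'\in W$; (iii) for parallel $f,g\colon X\to Y$, if there is $w\colon X'\to X$ in $W$ with $fw=gw$ then there is $v\colon Y\to Y'$ in $W$ with $vf=vg$. It satisfies proper calculus of right fractions if $(\mathcal{C}^{\mathrm{op}},W)$ satisfies proper calculus of left fractions. *)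

From HB Require Import structures.
From Stdlib Require Import ProofIrrelevance FunctionalExtensionality.
From mathcomp Require Import all_boot.

Set Implicit Arguments.
Unset Strict Implicit.
Unset Printing Implicit Defensive.

Record category := Category {
  Obj : Type;
  Hom : Obj -> Obj -> Type;
  cid : forall x, Hom x x;
  ccomp : forall x y z, Hom y z -> Hom x y -> Hom x z;
  ccomp_id_l : forall x y (f : Hom x y), ccomp (cid y) f = f;
  ccomp_id_r : forall x y (f : Hom x y), ccomp f (cid x) = f;
  ccompA : forall x y z t (h : Hom z t) (g : Hom y z) (f : Hom x y),
      ccomp h (ccomp g f) = ccomp (ccomp h g) f }.

Arguments Hom {c} x y.
Arguments cid {c} x.
Arguments ccomp {c x y z} g f.

Definition op_category (C : category) : category.
Proof.
refine (@Category (Obj C) (fun x y => @Hom C y x) (fun x => cid x)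
          (fun x y z g f => ccomp f g) _ _ _).
- by move=> x y f; apply: ccomp_id_r.
- by move=> x y f; apply: ccomp_id_l.
- by move=> x y z t h g f; symmetry; apply: ccompA.
Defined.

Definition cmarking (C : category) := forall x y : Obj C, Hom x y -> Prop.

Definition op_marking (C : category) (W : cmarking C) : cmarking (op_category C) :=
  fun x y (f : @Hom C y x) => W y x f.

(* Proper calculus of left fractions: (i), (ii'), (iii). *)
Definition proper_left (C : category) (W : cmarking C) : Prop :=
  [/\ (forall (x y z : Obj C) (g : Hom y z) (f : Hom x y),
          W _ _ f -> W _ _ g -> W _ _ (ccomp g f)),
      (forall x : Obj C, W x x (cid x)),
      (forall (X Y X' : Obj C) (f : Hom X Y) (w : Hom X X'), W _ _ w ->
          exists (Y' : Obj C) (f' : Hom X' Y') (w' : Hom Y Y'),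
            [/\ W _ _ w', ccomp f' w = ccomp w' f & (W _ _ f -> W _ _ f')])
    & (forall (X Y : Obj C) (f g : Hom X Y),
          (exists (X' : Obj C) (w : Hom X' X), W _ _ w /\ ccomp f w = ccomp g w) ->
          exists (Y' : Obj C) (v : Hom Y Y'), W _ _ v /\ ccomp v f = ccomp v g)].

Definition proper_right (C : category) (W : cmarking C) : Prop :=
  proper_left (op_marking W).

Record mono (m n : nat) := Mono {
  mfun :> 'I_m.+1 -> 'I_n.+1;
  mfunP : forall i j : 'I_m.+1, i <= j -> mfun i <= mfun j }.

Definition mono_id n : mono n n := @Mono n n id (fun i j h => h).

Definition mono_comp m n p (t : mono n p) (s : mono m n) : mono m p :=
  @Mono m p (fun i => t (s i)) (fun i j h => mfunP t (mfunP s h)).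

Definition sdeg : mono 1 0 := @Mono 1 0 (fun _ => ord0) (fun _ _ _ => leqnn 0).

Record sSet := SSet {
  simp :> nat -> Type;
  sact : forall m n, mono m n -> simp n -> simp m;
  sact_id : forall n (x : simp n), sact (mono_id n) x = x;
  sact_comp : forall m n p (t : mono n p) (s : mono m n) (x : simp p),
      sact (mono_comp t s) x = sact s (sact t x) }.

Arguments sact {s0 m n} t x.

Record sMap (X Y : sSet) := SMap {
  smap :> forall n, X n -> Y n;
  smapP : forall m n (t : mono m n) (x : X n), smap (sact t x) = sact t (smap x) }.

Arguments smap {X Y} s {n} x.

Record msSet := MSSet {
  msX :> sSet;
  mark : msX 1 -> Prop;
  mark_deg : forall x : msX 0, mark (sact sdeg x) }.

Arguments mark {m} x.

Record msMap (X Y : msSet) := MSMap {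
  msmap :> sMap X Y;
  msmapP : forall x : X 1, mark x -> mark (smap msmap x) }.

Definition sub_closed (X : sSet) (P : forall n, X n -> Prop) :=
  forall m n (t : mono m n) (x : X n), P n x -> P m (sact t x).

Lemma exist_eq (A : Type) (P : A -> Prop) (a b : A) (p : P a) (q : P b) :
  a = b -> exist P a p = exist P b q.
Proof. by move=> e; subst b; f_equal; apply: proof_irrelevance. Qed.

Definition subS (X : sSet) (P : forall n, X n -> Prop) (HP : sub_closed P) : sSet.
Proof.
refine (@SSet (fun n => {x : X n | P n x})
          (fun m n t x => exist (P m) (sact t (proj1_sig x)) (HP _ _ t _ (proj2_sig x)))
          _ _).
- by move=> n [x px]; apply: exist_eq; apply: sact_id.
- by move=> m n p t s [x px]; apply: exist_eq; apply: sact_comp.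
Defined.

Definition subS_incl (X : sSet) (P : forall n, X n -> Prop) (HP : sub_closed P) :
  sMap (subS HP) X := @SMap (subS HP) X (fun n x => proj1_sig x) (fun _ _ _ _ => erefl).

Definition msub (X : msSet) (P : forall n, X n -> Prop) (HP : sub_closed P) : msSet :=
  @MSSet (subS HP) (fun x => mark (proj1_sig x)) (fun x => mark_deg (proj1_sig x)).

Definition msub_incl (X : msSet) (P : forall n, X n -> Prop) (HP : sub_closed P) :
  msMap (msub HP) X := @MSMap (msub HP) X (subS_incl HP) (fun x h => h).

Definition mono_to (P : Type) (le : P -> P -> Prop) (n : nat) :=
  {f : 'I_n.+1 -> P | forall i j : 'I_n.+1, i <= j -> le (f i) (f j)}.

Definition pnerve (P : Type) (le : P -> P -> Prop) : sSet.
Proof.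
refine (@SSet (mono_to le)
          (fun m n t x => exist (fun f : 'I_m.+1 -> P => forall i j : 'I_m.+1, i <= j -> le (f i) (f j))
                                  (fun i => proj1_sig x (t i))
                                  (fun i j h => proj2_sig x _ _ (mfunP t h))) _ _).
- by move=> n [f fP]; apply: exist_eq.
- by move=> m n p t s [f fP]; apply: exist_eq.
Defined.

Definition omitP (P : Type) (le : P -> P -> Prop) (v : P) :
  forall n, pnerve le n -> Prop :=
  fun n x => forall i, proj1_sig x i <> v.
Arguments omitP {P} le v n x.

Lemma omitP_closed (P : Type) (le : P -> P -> Prop) (v : P) : sub_closed (omitP le v).
Proof. by move=> m n t x h i; apply: h. Qed.
Arguments omitP_closed {P} le v.

Definition Lvert n (k : 'I_n.+1) := {A : {set 'I_n.+1} | k \in A}.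

Definition Ltop n (k : 'I_n.+1) : Lvert k := exist _ setT (in_setT k).

Definition Lle n (k : 'I_n.+1) (A B : Lvert k) : Prop :=
  proj1_sig A \subset proj1_sig B.
Definition Rle n (k : 'I_n.+1) (A B : Lvert k) : Prop :=
  proj1_sig B \subset proj1_sig A.

Definition setmax n (A : {set 'I_n.+1}) : nat := \max_(i in A) (i : nat).
Definition setmin n (A : {set 'I_n.+1}) : nat := \big[minn/n]_(i in A) (i : nat).

Definition L_mark n (k : 'I_n.+1) (x : pnerve (@Lle n k) 1) : Prop :=
  setmax (proj1_sig (proj1_sig x ord0)) = setmax (proj1_sig (proj1_sig x ord_max)).
Definition R_mark n (k : 'I_n.+1) (x : pnerve (@Rle n k) 1) : Prop :=
  setmin (proj1_sig (proj1_sig x ord0)) = setmin (proj1_sig (proj1_sig x ord_max)).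

Definition L_ms n (k : 'I_n.+1) : msSet :=
  @MSSet (pnerve (@Lle n k)) (@L_mark n k) (fun x => erefl).
Definition R_ms n (k : 'I_n.+1) : msSet :=
  @MSSet (pnerve (@Rle n k)) (@R_mark n k) (fun x => erefl).

Definition LJ_ms n (k : 'I_n.+1) : msSet :=
  @msub (L_ms k) (omitP (@Lle n k) (Ltop k)) (omitP_closed _ (Ltop k)).
Definition RJ_ms n (k : 'I_n.+1) : msSet :=
  @msub (R_ms k) (omitP (@Rle n k) (Ltop k)) (omitP_closed _ (Ltop k)).

Definition LJ_incl n (k : 'I_n.+1) : msMap (LJ_ms k) (L_ms k) := msub_incl _.
Definition RJ_incl n (k : 'I_n.+1) : msMap (RJ_ms k) (R_ms k) := msub_incl _.

Definition le3 (a b : 'I_3) : Prop := a <= b.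
Definition Delta2 : sSet := pnerve le3.

Definition hornP : forall n, Delta2 n -> Prop :=
  fun n x => (forall i, (proj1_sig x i : nat) != 0) \/ (forall i, (proj1_sig x i : nat) != 2).

Lemma hornP_closed : sub_closed hornP.
Proof. by move=> m n t x [h|h]; [left|right] => i; apply: h. Qed.

Definition Horn21 : sSet := subS hornP_closed.

Definition weakly_closed (X : msSet) : Prop :=
  forall h : sMap Horn21 X, (forall t : Horn21 1, mark (smap h t)) ->
  exists g : sMap Delta2 X,
    (forall n (t : Horn21 n), smap g (proj1_sig t) = smap h t) /\
    (forall t : Delta2 1, mark (smap g t)).

Definition rlp (A B : msSet) (i : msMap A B) (X : msSet) : Prop :=
  forall f : msMap A X, exists g : msMap B X,
    forall n (a : A n), smap g (smap i a) = smap f a.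

Definition CLF (X : msSet) : Prop :=
  weakly_closed X /\
  forall n (k : 'I_n.+1), 2 <= n -> 0 < k -> rlp (LJ_incl k) X.

Definition CRF (X : msSet) : Prop :=
  weakly_closed X /\
  forall n (k : 'I_n.+1), 2 <= n -> k < n -> rlp (RJ_incl k) X.

Record csimp (C : category) (n : nat) := CSimp {
  cob : 'I_n.+1 -> Obj C;
  car : forall i j : 'I_n.+1, i <= j -> Hom (cob i) (cob j);
  car_id : forall (i : 'I_n.+1) (h : i <= i), car h = cid (cob i);
  car_comp : forall i j l : 'I_n.+1, forall (hij : i <= j) (hjl : j <= l) (hil : i <= l),
      car hil = ccomp (car hjl) (car hij) }.

Arguments car {C n} c {i j} h.

Definition csact (C : category) m n (t : mono m n) (x : csimp C n) : csimp C m :=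
  @CSimp C m (fun i => cob x (t i)) (fun i j h => car x (mfunP t h))
    (fun i h => car_id x _) (fun i j l a b c => car_comp x _ _ _).

Lemma csimp_eq (C : category) n (o : 'I_n.+1 -> Obj C)
  (a b : forall i j : 'I_n.+1, i <= j -> Hom (o i) (o j)) pa qa pb qb :
  (forall i j h, a i j h = b i j h) -> @CSimp C n o a pa qa = @CSimp C n o b pb qb.
Proof.
move=> e.
have eab : a = b.
  apply: functional_extensionality_dep => i.
  apply: functional_extensionality_dep => j.
  apply: functional_extensionality_dep => h.
  exact: e.
subst b; f_equal; apply: proof_irrelevance.
Qed.

Definition cnerve (C : category) : sSet.
Proof.
refine (@SSet (csimp C) (@csact C) _ _).
- by move=> n [o a p q]; apply: csimp_eq.
- by move=> m n p t s [o a pa qa]; apply: csimp_eq.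
Defined.

Definition cmark (C : category) (W : cmarking C) (x : cnerve C 1) : Prop :=
  W _ _ (car x (i := ord0) (j := ord_max) isT).

Lemma cmark_deg (C : category) (W : cmarking C) (HW : forall x : Obj C, W x x (cid x))
  (x : cnerve C 0) : cmark W (sact sdeg x).
Proof. by rewrite /cmark /= car_id; apply: HW. Qed.

Definition marked_nerve (C : category) (W : cmarking C)
  (HW : forall x : Obj C, W x x (cid x)) : msSet :=
  @MSSet (cnerve C) (cmark W) (cmark_deg HW).

(* A simplicial map from the nerve of a poset to the nerve of C is the same thing as a
   functor from the poset to C, so lifting against LJ^n_k -> L^n_k amounts to extending
   W-marked diagrams from L^n_k minus its top vertex [n] to all of L^n_k, that is, to
   finding a cocone whose legs lie in W wherever the marking of L^n_k demands it.
   Given a proper calculus of left fractions, the cocone is built one vertex at a time,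
   smaller sets first: the leg at a new set a comes from condition (ii') applied to the
   W-map a ∩ {k,...,n} -> a, and condition (iii), applied to the finitely many sets
   below a, makes it agree with the legs already built. Conversely, closure under
   composition is read off from fillers of Λ^2_1, condition (ii') from extensions of a
   span along L^2_1 and L^2_2, and condition (iii) from an extension along L^3_1.
   Right fractions are dual: A ↦ {n - i | i ∈ A} identifies R^n_k with the opposite of
   L^n_{n-k}, and a diagram in C on a poset is a diagram in C^op on the opposite poset. *)

From mathcomp Require Import all_boot zify.
From Stdlib Require Import ProofIrrelevance FunctionalExtensionality ClassicalEpsilon.

Set Implicit Arguments.
Unset Strict Implicit.
Unset Printing Implicit Defensive.

Definition mono_edge m (i j : 'I_m.+1) (h : i <= j) : mono 1 m.
Proof.
refine (@Mono 1 m (fun u : 'I_2 => if val u is 0 then i else j) _).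
by move=> [[|[|u]] hu] [[|[|w]] hw].
Defined.

Section Arrows.
Variable C : category.

(* Arrows are packed with their endpoints, so that diagrams on posets can be stated
   without transport along equalities of objects; [castH] performs that transport. *)
Definition Arr := {a : Obj C & {b : Obj C & Hom a b}}.
Definition mkArr (a b : Obj C) (g : Hom a b) : Arr := existT _ a (existT _ b g).
Definition src (u : Arr) : Obj C := projT1 u.
Definition tgt (u : Arr) : Obj C := projT1 (projT2 u).
Definition hom (u : Arr) : Hom (src u) (tgt u) := projT2 (projT2 u).

Definition castH (a a' b b' : Obj C) (e1 : a = a') (e2 : b = b') (g : Hom a b) : Hom a' b'.
Proof. by case: a' / e1; case: b' / e2; exact: g. Defined.

Lemma mkArr_castH a a' b b' (e1 : a = a') (e2 : b = b') (g : Hom a b) :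
  mkArr (castH e1 e2 g) = mkArr g.
Proof. by case: a' / e1; case: b' / e2. Qed.

Lemma castH_id a b (e1 : a = a) (e2 : b = b) (g : Hom a b) : castH e1 e2 g = g.
Proof. by rewrite (proof_irrelevance _ e1 erefl) (proof_irrelevance _ e2 erefl). Qed.

Lemma mkArr_hom (u : Arr) : mkArr (hom u) = u.
Proof. by case: u => a [b g]. Qed.

Lemma mkArr_src a b a' b' (g : Hom a b) (g' : Hom a' b') : mkArr g = mkArr g' -> a = a'.
Proof. by move/(f_equal src). Qed.

Lemma mkArr_tgt a b a' b' (g : Hom a b) (g' : Hom a' b') : mkArr g = mkArr g' -> b = b'.
Proof. by move/(f_equal tgt). Qed.

Lemma mkArr_inj a b (g g' : Hom a b) : mkArr g = mkArr g' -> g = g'.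
Proof. by move=> e; apply: (inj_pair2 _ _ _ _ _ (inj_pair2 _ _ _ _ _ e)). Qed.

Lemma castH_hom (u : Arr) a b (g : Hom a b) (es : src u = a) (et : tgt u = b) :
  u = mkArr g -> castH es et (hom u) = g.
Proof. by move=> eu; subst u; apply: castH_id. Qed.

Definition WA (W : cmarking C) (u : Arr) : Prop := W _ _ (hom u).

Lemma WA_castH (W : cmarking C) (u : Arr) a b (es : src u = a) (et : tgt u = b) :
  WA W u -> W _ _ (castH es et (hom u)).
Proof. by case: a / es; case: b / et. Qed.

Definition Acomp (u v w : Arr) : Prop :=
  exists a b c (g : Hom a b) (h : Hom b c),
    [/\ u = mkArr g, v = mkArr h & w = mkArr (ccomp h g)].

Lemma Acomp_mk a b c (g : Hom a b) (h : Hom b c) :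
  Acomp (mkArr g) (mkArr h) (mkArr (ccomp h g)).
Proof. by exists a, b, c, g, h. Qed.

Lemma Acomp_idl a b (g : Hom a b) : Acomp (mkArr (cid a)) (mkArr g) (mkArr g).
Proof. by have := Acomp_mk (cid a) g; rewrite ccomp_id_r. Qed.

Lemma Acomp_idr a b (g : Hom a b) : Acomp (mkArr g) (mkArr (cid b)) (mkArr g).
Proof. by have := Acomp_mk g (cid b); rewrite ccomp_id_l. Qed.

Lemma Acomp_inv a b (g : Hom a b) v w : Acomp (mkArr g) v w ->
  exists c (h : Hom b c), v = mkArr h /\ w = mkArr (ccomp h g).
Proof.
case=> a' [b' [c [g' [h [e1 e2 e3]]]]].
have ea := mkArr_src e1; have eb := mkArr_tgt e1; subst a' b'.
by have eg := mkArr_inj e1; subst g'; exists c, h.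
Qed.

Lemma Acomp_fun a b c (g : Hom a b) (h : Hom b c) w :
  Acomp (mkArr g) (mkArr h) w -> w = mkArr (ccomp h g).
Proof.
case/Acomp_inv=> c' [h' [e1 e2]].
have ec := mkArr_tgt e1; subst c'.
by have eh := mkArr_inj e1; subst h'.
Qed.

Lemma Acomp_idl_inv a v w : Acomp (mkArr (cid a)) v w -> v = w.
Proof. by case/Acomp_inv=> c [h [-> ->]]; rewrite ccomp_id_r. Qed.

Lemma Acomp_square a b1 b2 (g1 : Hom a b1) (g2 : Hom a b2) u1 u2 t :
  Acomp (mkArr g1) u1 t -> Acomp (mkArr g2) u2 t ->
  exists c (h1 : Hom b1 c) (h2 : Hom b2 c),
    [/\ u1 = mkArr h1, u2 = mkArr h2 & ccomp h1 g1 = ccomp h2 g2].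
Proof.
case/Acomp_inv=> c [h1 [-> ->]]; case/Acomp_inv=> c' [h2 [-> e]].
have ec := mkArr_tgt e; subst c'.
by exists c, h1, h2; split => //; apply: mkArr_inj.
Qed.

Lemma castH_Acomp (u v w : Arr) (a b c : Obj C) (e1 : src u = a) (e2 : tgt u = b)
  (e3 : src v = b) (e4 : tgt v = c) (e5 : src w = a) (e6 : tgt w = c) :
  Acomp u v w -> castH e5 e6 (hom w) = ccomp (castH e3 e4 (hom v)) (castH e1 e2 (hom u)).
Proof.
case=> a0 [b0 [c0 [g [h [eu ev ew]]]]]; subst u v w.
move: e1 e2 e3 e4 e5 e6 => /= e1 e2 e3 e4 e5 e6; subst a b c.
by rewrite !castH_id.
Qed.

Definition arr n (x : csimp C n) (i j : 'I_n.+1) (h : i <= j) : Arr := mkArr (car x h).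

Definition arr1 (x : csimp C 1) : Arr := arr x (isT : (ord0 : 'I_2) <= ord_max).

Lemma arr_id n (x : csimp C n) (i : 'I_n.+1) (h : i <= i) : arr x h = mkArr (cid (cob x i)).
Proof. by rewrite /arr car_id. Qed.

Lemma arr_comp n (x : csimp C n) (i j l : 'I_n.+1) (h1 : i <= j) (h2 : j <= l) (h3 : i <= l) :
  Acomp (arr x h1) (arr x h2) (arr x h3).
Proof. by rewrite /arr (car_comp x h1 h2 h3); apply: Acomp_mk. Qed.

Lemma csimp_ext n (x y : csimp C n) :
  (forall (i j : 'I_n.+1) (h : i <= j), arr x h = arr y h) -> x = y.
Proof.
case: x => o1 a1 p1 q1; case: y => o2 a2 p2 q2 /= e.
have eo : o1 = o2.
  by apply: functional_extensionality => i; have /(f_equal src) := e i i (leqnn i).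
subst o2; apply: csimp_eq => i j h.
by have /mkArr_inj := e i j h.
Qed.

Lemma arr_smap (X : sSet) (f : sMap X (cnerve C)) m n (t : mono m n) (x : X n)
   (i j : 'I_m.+1) (h : i <= j) (h' : t i <= t j) :
  arr (smap f (sact t x)) h = arr (smap f x) h'.
Proof. by rewrite (smapP f) /arr /= (bool_irrelevance (mfunP t h) h'). Qed.

Lemma arr1_sact_edge (X : sSet) (f : sMap X (cnerve C)) m (x : X m) (i j : 'I_m.+1) (h : i <= j) :
  arr1 (smap f (sact (mono_edge h) x)) = arr (smap f x) h.
Proof. exact: arr_smap. Qed.

End Arrows.

Definition opArr (C : category) (u : Arr C) : Arr (op_category C) :=
  @mkArr (op_category C) (tgt u) (src u) (hom u).

Lemma opArrK (C : category) (u : Arr (op_category C)) : @opArr C (@opArr (op_category C) u) = u.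
Proof. by case: u => a [b g]. Qed.

Lemma Acomp_op (C : category) (u v w : Arr C) :
  Acomp u v w -> Acomp (opArr v) (opArr u) (opArr w).
Proof. by case=> a [b [c [g [h [-> -> ->]]]]]; apply: (@Acomp_mk (op_category C)). Qed.

(** * Diagrams on posets and maps out of their nerves *)

Section Diagrams.
Variables (C : category) (P : Type) (le : rel P).

Record diagram_on (ok : P -> Prop) (Ob : P -> Obj C) (E : P -> P -> Arr C) : Prop := {
  diagram_src : forall a b, ok a -> ok b -> le a b -> src (E a b) = Ob a;
  diagram_tgt : forall a b, ok a -> ok b -> le a b -> tgt (E a b) = Ob b;
  diagram_id : forall a, ok a -> E a a = mkArr (cid (Ob a));
  diagram_comp : forall a b c, ok a -> ok b -> ok c -> le a b -> le b c ->
    Acomp (E a b) (E b c) (E a c) }.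

Variables (W : cmarking C) (mk : P -> P -> Prop).

Definition marked_on (ok : P -> Prop) (E : P -> P -> Arr C) : Prop :=
  forall a b, ok a -> ok b -> le a b -> mk a b -> WA W (E a b).

Definition extendable (v : P) : Prop :=
  forall Ob E, diagram_on (fun a => a <> v) Ob E -> marked_on (fun a => a <> v) E ->
  exists Ob' E', [/\ diagram_on (fun _ => True) Ob' E', marked_on (fun _ => True) E' &
    forall a b, a <> v -> b <> v -> le a b -> E' a b = E a b].

End Diagrams.

Definition pnerve_ms (P : Type) (le : rel P) (mk : P -> P -> Prop) (mk_refl : forall a, mk a a) :
  msSet :=
  @MSSet (pnerve (fun a b => le a b))
    (fun x => mk (proj1_sig x ord0) (proj1_sig x ord_max)) (fun x => mk_refl _).
Arguments pnerve_ms {P} le mk mk_refl.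

Section DiagramNerve.
Variables (C : category) (P : Type) (le : rel P) (ok : P -> Prop).
Variables (Ob : P -> Obj C) (E : P -> P -> Arr C).
Hypothesis hD : diagram_on le ok Ob E.

Definition diagram_simplex m (x : pnerve (fun a b => le a b) m)
    (hx : forall i, ok (proj1_sig x i)) : csimp C m.
Proof.
refine (@CSimp C m (fun i => Ob (proj1_sig x i))
  (fun i j h => castH (diagram_src hD (hx i) (hx j) (proj2_sig x i j h))
                      (diagram_tgt hD (hx i) (hx j) (proj2_sig x i j h))
                      (hom (E (proj1_sig x i) (proj1_sig x j)))) _ _).
- by move=> i h; apply: castH_hom; apply: (diagram_id hD).
- by move=> i j l hij hjl hil; apply: castH_Acomp; apply: (diagram_comp hD);
    [exact: hx | exact: hx | exact: hx | exact: (proj2_sig x) | exact: (proj2_sig x)].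
Defined.
Arguments diagram_simplex [m] x hx.

Lemma arr_diagram_simplex m (x : pnerve (fun a b => le a b) m) hx (i j : 'I_m.+1) (h : i <= j) :
  arr (diagram_simplex x hx) h = E (proj1_sig x i) (proj1_sig x j).
Proof. by rewrite /arr /= mkArr_castH mkArr_hom. Qed.

Lemma diagram_simplex_sact m n (t : mono m n) (x : pnerve (fun a b => le a b) n) hx hx' :
  diagram_simplex (sact t x) hx' = csact t (diagram_simplex x hx).
Proof.
apply: csimp_ext => i j h; rewrite arr_diagram_simplex.
by rewrite -[RHS]/(arr (diagram_simplex x hx) (mfunP t h)) arr_diagram_simplex.
Qed.

Variable HP : sub_closed (fun n (x : pnerve (fun a b => le a b) n) => forall i, ok (proj1_sig x i)).

Definition diagram_map_sub : sMap (subS HP) (cnerve C) :=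
  @SMap (subS HP) (cnerve C) (fun n x => diagram_simplex (proj1_sig x) (proj2_sig x))
    (fun m n t x => diagram_simplex_sact (proj2_sig x) _).

Variable W : cmarking C.
Arguments W : clear implicits.
Variable HW : forall x, W x x (cid x).
Variables (mk : P -> P -> Prop) (mk_refl : forall a, mk a a).
Hypothesis hM : marked_on le W mk ok E.

Definition marked_diagram_map_sub :
  msMap (msub (X := pnerve_ms le mk mk_refl) HP) (marked_nerve HW).
Proof.
refine (@MSMap (msub (X := pnerve_ms le mk mk_refl) HP) (marked_nerve HW) diagram_map_sub _).
move=> x hx.
by apply: WA_castH; apply: hM => //;
  [exact: (proj2_sig x) | exact: (proj2_sig x) | exact: (proj2_sig (proj1_sig x))].
Defined.

End DiagramNerve.
Arguments diagram_simplex {C P le ok Ob E} hD [m] x hx.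

Section TotalDiagramNerve.
Variables (C : category) (P : Type) (le : rel P) (Ob : P -> Obj C) (E : P -> P -> Arr C).
Hypothesis hD : diagram_on le (fun _ => True) Ob E.

Definition diagram_map : sMap (pnerve (fun a b => le a b)) (cnerve C) :=
  @SMap _ (cnerve C) (fun n x => diagram_simplex hD x (fun _ => I))
    (fun m n t x => diagram_simplex_sact hD (fun _ => I) _).

Variable W : cmarking C.
Arguments W : clear implicits.
Variable HW : forall x, W x x (cid x).
Variables (mk : P -> P -> Prop) (mk_refl : forall a, mk a a).
Hypothesis hM : marked_on le W mk (fun _ => True) E.

Definition marked_diagram_map : msMap (pnerve_ms le mk mk_refl) (marked_nerve HW).
Proof.
refine (@MSMap (pnerve_ms le mk mk_refl) (marked_nerve HW) diagram_map _) => x hx.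
by apply: WA_castH; apply: hM => //; apply: (proj2_sig x).
Defined.

End TotalDiagramNerve.

Section NerveDiagram.
Variables (C : category) (P : Type) (le : rel P).
Hypothesis le_refl : forall a, le a a.
Hypothesis le_trans : forall a b c, le a b -> le b c -> le a c.
Variable ok : P -> Prop.
Variable HP : sub_closed (fun n (x : pnerve (fun a b => le a b) n) => forall i, ok (proj1_sig x i)).
Variables (d : P) (okd : ok d) (f : sMap (subS HP) (cnerve C)).

Definition sub_vertex a (ha : ok a) : subS HP 0.
Proof.
unshelve eexists; first exists (fun _ : 'I_1 => a).
- by move=> i j _; apply: le_refl.
- by move=> i.
Defined.

Definition sub_edge a b (ha : ok a) (hb : ok b) (hab : le a b) : subS HP 1.
Proof.
unshelve eexists; first exists (fun u : 'I_2 => if val u is 0 then a else b).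
- by move=> [[|[|u]] hu] [[|[|w]] hw].
- by move=> [[|[|u]] hu].
Defined.

Definition sub_triangle a b c (ha : ok a) (hb : ok b) (hc : ok c) (hab : le a b) (hbc : le b c) :
  subS HP 2.
Proof.
unshelve eexists; first exists (fun u : 'I_3 => match val u with 0 => a | 1 => b | _ => c end).
- by move=> [[|[|[|u]]] hu] [[|[|[|w]]] hw] //= _; apply: le_trans hbc.
- by move=> [[|[|[|u]]] hu].
Defined.

(* Values outside [ok] are junk. *)
Definition map_obj a : Obj C :=
  if excluded_middle_informative (ok a) is left ha then cob (smap f (sub_vertex ha)) ord0
  else cob (smap f (sub_vertex okd)) ord0.

Definition map_arr a b : Arr C :=
  if excluded_middle_informative (ok a /\ ok b /\ le a b) is left (conj ha (conj hb hab))
  then arr1 (smap f (sub_edge ha hb hab)) else mkArr (cid (map_obj a)).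

Lemma map_objE a (ha : ok a) : map_obj a = cob (smap f (sub_vertex ha)) ord0.
Proof.
rewrite /map_obj; case: excluded_middle_informative => [ha'|//].
by rewrite (proof_irrelevance _ ha' ha).
Qed.

Lemma map_arrE a b (ha : ok a) (hb : ok b) (hab : le a b) :
  map_arr a b = arr1 (smap f (sub_edge ha hb hab)).
Proof.
rewrite /map_arr; case: excluded_middle_informative => [[ha' [hb' hab']] | []//].
by rewrite (proof_irrelevance _ ha' ha) (proof_irrelevance _ hb' hb) (bool_irrelevance hab' hab).
Qed.

Lemma arr_map_arr m (x : subS HP m) (i j : 'I_m.+1) (h : i <= j) :
  arr (smap f x) h = map_arr (proj1_sig (proj1_sig x) i) (proj1_sig (proj1_sig x) j).
Proof.
have hij := proj2_sig (proj1_sig x) i j h.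
rewrite (map_arrE (proj2_sig x i) (proj2_sig x j) hij).
have -> : sub_edge (proj2_sig x i) (proj2_sig x j) hij = sact (mono_edge h) x.
  apply: exist_eq; apply: exist_eq.
  by apply: functional_extensionality => -[[|[|u]] hu].
by rewrite arr1_sact_edge.
Qed.

Lemma map_arr_id a : ok a -> map_arr a a = mkArr (cid (map_obj a)).
Proof.
move=> ha; rewrite -(arr_map_arr (sub_vertex ha) (leqnn ord0)) arr_id.
by rewrite (map_objE ha).
Qed.

Lemma map_arr_src a b : ok a -> ok b -> le a b -> src (map_arr a b) = map_obj a.
Proof.
move=> ha hb hab; rewrite (map_arrE ha hb hab).
rewrite -[LHS]/(src (arr (smap f (sub_edge ha hb hab)) (leqnn ord0))).
by rewrite arr_map_arr map_arr_id.
Qed.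

Lemma map_arr_tgt a b : ok a -> ok b -> le a b -> tgt (map_arr a b) = map_obj b.
Proof.
move=> ha hb hab; rewrite (map_arrE ha hb hab).
rewrite -[LHS]/(tgt (arr (smap f (sub_edge ha hb hab)) (leqnn (ord_max : 'I_2)))).
by rewrite arr_map_arr map_arr_id.
Qed.

Lemma map_arr_comp a b c : ok a -> ok b -> ok c -> le a b -> le b c ->
  Acomp (map_arr a b) (map_arr b c) (map_arr a c).
Proof.
move=> ha hb hc hab hbc; pose x := sub_triangle ha hb hc hab hbc.
rewrite -(arr_map_arr x (isT : (ord0 : 'I_3) <= (@Ordinal 3 1 isT))).
rewrite -(arr_map_arr x (isT : (@Ordinal 3 1 isT) <= (@Ordinal 3 2 isT))).
rewrite -(arr_map_arr x (isT : (ord0 : 'I_3) <= (@Ordinal 3 2 isT))).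
exact: arr_comp.
Qed.

Lemma diagram_of_map : diagram_on le ok map_obj map_arr.
Proof.
split; [exact: map_arr_src | exact: map_arr_tgt | exact: map_arr_id | exact: map_arr_comp].
Qed.

End NerveDiagram.

Section LiftingDiagrams.
Variable C : category.
Variable W : cmarking C.
Arguments W : clear implicits.
Variable HW : forall x, W x x (cid x).
Variables (P : Type) (le : rel P) (mk : P -> P -> Prop) (mk_refl : forall a, mk a a).
Hypothesis le_refl : forall a, le a a.
Hypothesis le_trans : forall a b c, le a b -> le b c -> le a c.
(* [d] only supplies junk values for diagrams extracted from maps out of P \ {v}. *)
Variables (v d : P).
Hypothesis dv : d <> v.

Notation omit_incl :=
  (msub_incl (X := pnerve_ms le mk mk_refl) (omitP_closed (fun a b => is_true (le a b)) v)).

(* The extraction of diagrams from maps applies to simplicial subsets; a map out of the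
   whole nerve is viewed on the subset of all simplices. *)
Lemma all_closed :
  sub_closed (fun n (x : pnerve (fun a b => le a b) n) =>
                forall i, (fun _ => True) (proj1_sig x i)).
Proof. by []. Qed.

Definition restrict_all (g : sMap (pnerve (fun a b => le a b)) (cnerve C)) :
  sMap (subS all_closed) (cnerve C) :=
  @SMap (subS all_closed) (cnerve C) (fun n x => smap g (proj1_sig x))
    (fun m n t x => smapP g t (proj1_sig x)).

Lemma extendable_of_rlp : rlp omit_incl (marked_nerve HW) -> extendable le W mk v.
Proof.
move=> hrlp Ob E hD hM.
have [g hg] := hrlp (marked_diagram_map_sub hD (omitP_closed _ v) HW mk_refl hM).
pose g' := restrict_all g.
exists (map_obj le_refl (d := v) I g'), (map_arr le_refl (d := v) I g').
split.
- exact: diagram_of_map.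
- move=> a b _ _ hab hm; rewrite (map_arrE le_refl I g' I I hab).
  exact: (msmapP g (x := proj1_sig (sub_edge le_refl all_closed I I hab)) hm).
- move=> a b ha hb hab; rewrite (map_arrE le_refl I g' I I hab).
  have := f_equal (@arr1 C)
    (hg 1 (sub_edge le_refl (ok := fun a => a <> v) (omitP_closed _ v) ha hb hab)).
  by rewrite /arr1 arr_diagram_simplex.
Qed.

Lemma rlp_of_extendable : extendable le W mk v -> rlp omit_incl (marked_nerve HW).
Proof.
move=> hext f.
pose Ob := map_obj le_refl (ok := fun a => a <> v) dv f.
pose E := map_arr le_refl (ok := fun a => a <> v) dv f.
have hD : diagram_on le (fun a => a <> v) Ob E := diagram_of_map le_refl le_trans dv f.
have hM : marked_on le W mk (fun a => a <> v) E.
  move=> a b ha hb hab hm; rewrite /E (map_arrE le_refl dv f ha hb hab).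
  exact: (msmapP f (x := sub_edge le_refl (ok := fun a => a <> v) (omitP_closed _ v) ha hb hab) hm).
have [Ob' [E' [hD' hM' hE']]] := hext Ob E hD hM.
exists (marked_diagram_map hD' HW mk_refl hM') => m x.
apply: csimp_ext => i j h.
have hx := proj2_sig x; have hle := proj2_sig (proj1_sig x) i j h.
rewrite [LHS]arr_diagram_simplex /= hE'; [|exact: hx|exact: hx|exact: hle].
by symmetry; exact: (arr_map_arr le_refl dv f x h).
Qed.

Lemma rlp_omit_iff : rlp omit_incl (marked_nerve HW) <-> extendable le W mk v.
Proof. by split; [apply: extendable_of_rlp | apply: rlp_of_extendable]. Qed.

End LiftingDiagrams.

(** * Opposite diagrams *)

Section DiagramOperations.
Variables (C : category) (P Q : Type).

Lemma diagram_comap (leP : rel P) (leQ : rel Q) (okP : P -> Prop) (okQ : Q -> Prop)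
    (phi : P -> Q) (Ob : Q -> Obj C) (E : Q -> Q -> Arr C) :
  (forall a, okP a -> okQ (phi a)) ->
  (forall a b, okP a -> okP b -> leP a b -> leQ (phi a) (phi b)) ->
  diagram_on leQ okQ Ob E ->
  diagram_on leP okP (fun a => Ob (phi a)) (fun a b => E (phi a) (phi b)).
Proof.
move=> hok hle [hsrc htgt hid hcomp]; split.
- by move=> a b ha hb hab; apply: hsrc; auto.
- by move=> a b ha hb hab; apply: htgt; auto.
- by move=> a ha; apply: hid; auto.
- by move=> a b c ha hb hc hab hbc; apply: hcomp; auto.
Qed.

Lemma diagram_op (le : rel P) (ok : P -> Prop) (Ob : P -> Obj C) (E : P -> P -> Arr C) :
  diagram_on le ok Ob E ->
  @diagram_on (op_category C) P (fun a b => le b a) ok Ob (fun a b => opArr (E b a)).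
Proof.
case=> hsrc htgt hid hcomp; split.
- by move=> a b ha hb hab; apply: htgt.
- by move=> a b ha hb hab; apply: hsrc.
- by move=> a ha; rewrite hid.
- by move=> a b c ha hb hc hab hbc; apply: Acomp_op; apply: hcomp.
Qed.

Lemma diagram_op_op (le : rel P) (ok : P -> Prop) (Ob : P -> Obj C) (E : P -> P -> Arr C) :
  @diagram_on (op_category (op_category C)) P le ok Ob E <-> diagram_on le ok Ob E.
Proof. by split; case=> *; split. Qed.

End DiagramOperations.

Section OppositeExtension.
Variables (C : category) (W : cmarking C).
Variables (P Q : Type) (leP : rel P) (leQ : rel Q) (mkP : P -> P -> Prop) (mkQ : Q -> Q -> Prop).
Variables (sigma : P -> Q) (tau : Q -> P).
Hypotheses (sigmaK : cancel sigma tau) (tauK : cancel tau sigma).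
Hypothesis le_sigma : forall a b, leQ (sigma a) (sigma b) = leP b a.
Hypothesis mk_sigma : forall a b, mkQ (sigma a) (sigma b) <-> mkP b a.

Lemma le_tau q r : leQ q r = leP (tau r) (tau q).
Proof. by rewrite -le_sigma !tauK. Qed.

Lemma mk_tau q r : mkQ q r <-> mkP (tau r) (tau q).
Proof. by rewrite -mk_sigma !tauK. Qed.

Lemma extendable_op v : extendable leP W mkP v -> extendable leQ (op_marking W) mkQ (sigma v).
Proof.
move=> hext Ob E hD hM.
have ok_sigma a : a <> v -> sigma a <> sigma v by move=> ha /(can_inj sigmaK).
have ok_tau q : q <> sigma v -> tau q <> v by move=> hq e; apply: hq; rewrite -e tauK.
pose EP a b : Arr C := @opArr (op_category C) (E (sigma b) (sigma a)).
have hDP : diagram_on (C := C) leP (fun a => a <> v) (fun a => Ob (sigma a)) EP.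
  apply/diagram_op_op.
  apply: (diagram_comap (leP := leP) (okP := fun a => a <> v) (okQ := fun q => q <> sigma v)
           ok_sigma _ (diagram_op hD)).
  by move=> a b _ _ hab; rewrite le_sigma.
have hMP : marked_on leP W mkP (fun a => a <> v) EP.
  move=> a b ha hb hab hm; apply: hM; rewrite ?le_sigma ?mk_sigma; auto.
have [ObP [EP' [hD' hM' hE']]] := hext _ _ hDP hMP.
exists (fun q => ObP (tau q)), (fun q r => opArr (EP' (tau r) (tau q))); split.
- apply: (diagram_comap (okQ := fun _ => True) _ _ (diagram_op hD')) => // q r _ _.
  by rewrite le_tau.
- by move=> q r _ _ hqr hm; apply: hM'; rewrite -?le_tau -?mk_tau.
- move=> q r hq hr hqr; rewrite hE'; rewrite -?le_tau; auto.
  by rewrite /EP opArrK !tauK.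
Qed.

End OppositeExtension.

Lemma extendable_op_op (C : category) (W : cmarking C) (P : Type) (le : rel P)
    (mk : P -> P -> Prop) (v : P) :
  extendable (C := op_category (op_category C)) le (op_marking (op_marking W)) mk v <->
  extendable le W mk v.
Proof.
split=> hext Ob E /diagram_op_op hD hM.
- have [Ob' [E' [/diagram_op_op hD' hM' hE']]] := hext Ob E hD hM.
  by exists Ob', E'.
- have [Ob' [E' [/diagram_op_op hD' hM' hE']]] := hext Ob E hD hM.
  by exists Ob', E'.
Qed.

(** * Closure under composition and the horn Λ^2_1 *)

Definition comp_closed (C : category) (W : cmarking C) : Prop :=
  forall x y z (g : Hom y z) (f : Hom x y), W _ _ f -> W _ _ g -> W _ _ (ccomp g f).

Lemma comp_closed_op (C : category) (W : cmarking C) :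
  comp_closed (op_marking W) <-> comp_closed W.
Proof. by split=> hW x y z g f wf wg; apply: hW. Qed.

Section PairDiagram.
Variables (C : category) (X0 X1 X2 : Obj C) (g1 : Hom X0 X1) (g2 : Hom X1 X2).

Definition pair_obj (i : 'I_3) : Obj C := match val i with 0 => X0 | 1 => X1 | _ => X2 end.

Definition pair_arr (i j : 'I_3) : Arr C :=
  match val i, val j with
  | 0, 0 => mkArr (cid X0) | 0, 1 => mkArr g1 | 0, _ => mkArr (ccomp g2 g1)
  | 1, 1 => mkArr (cid X1) | 1, _.+2 => mkArr g2
  | _.+2, _.+2 => mkArr (cid X2) | _, _ => mkArr (cid X0) end.

Lemma pair_diagram : diagram_on (fun a b : 'I_3 => a <= b) (fun _ => True) pair_obj pair_arr.
Proof.
split.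
- by move=> [[|[|[|a]]] ?] [[|[|[|b]]] ?].
- by move=> [[|[|[|a]]] ?] [[|[|[|b]]] ?].
- by move=> [[|[|[|a]]] ?].
- move=> [[|[|[|a]]] ?] [[|[|[|b]]] ?] [[|[|[|c]]] ?] //= _ _ _ _ _; rewrite /pair_arr /=;
    first [apply: Acomp_idl | apply: Acomp_idr | apply: Acomp_mk].
Qed.

End PairDiagram.

Definition mono_vertex m (i : 'I_m.+1) : mono 0 m := @Mono 0 m (fun _ => i) (fun _ _ _ => leqnn i).

Definition delta_top : Delta2 2 :=
  exist (fun f : 'I_3 -> 'I_3 => forall i j : 'I_3, i <= j -> le3 (f i) (f j)) id (fun _ _ h => h).

Definition delta_vertex (a : 'I_3) : Delta2 0 := sact (mono_vertex a) delta_top.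
Definition delta_edge (a b : 'I_3) (h : a <= b) : Delta2 1 := sact (mono_edge h) delta_top.

Definition o1 : 'I_3 := @Ordinal 3 1 isT.
Definition o2 : 'I_3 := @Ordinal 3 2 isT.

Definition horn_vertex (a : 'I_3) : Horn21 0.
Proof.
exists (delta_vertex a).
by case: a => [[|[|[|a]]] ?]; [right | left | left | by []].
Defined.

Definition horn01 : Horn21 1.
Proof. by exists (delta_edge (isT : ord0 <= o1)); right => -[[|[|u]] ?]. Defined.

Definition horn12 : Horn21 1.
Proof. by exists (delta_edge (isT : o1 <= o2)); left => -[[|[|u]] ?]. Defined.

Lemma horn_eq m (e e' : Horn21 m) :
  (forall i, proj1_sig (proj1_sig e) i = proj1_sig (proj1_sig e') i) -> e = e'.
Proof.
case: e => [[fe pe] he]; case: e' => [[fe' pe'] he'] /= eq.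
have efe : fe = fe' by apply: functional_extensionality.
by subst fe'; apply: exist_eq; apply: exist_eq.
Qed.

Lemma horn_edges (e : Horn21 1) :
  [\/ e = sact sdeg (horn_vertex (proj1_sig (proj1_sig e) ord0)), e = horn01 | e = horn12].
Proof.
have I2P (u : 'I_2) : u = ord0 \/ u = ord_max.
  by case: u => [[|[|u]] hu]; [left | right | by []]; apply: val_inj.
case: e => [[fe pe] he] /=.
case: (eqVneq (fe ord0) (fe ord_max)) => [e01 | n01].
  by apply: Or31; apply: horn_eq => u; case: (I2P u) => ->; rewrite -?e01.
have key : (val (fe ord0) == 0) && (val (fe ord_max) == 1) ||
           (val (fe ord0) == 1) && (val (fe ord_max) == 2).
  have := pe ord0 ord_max isT; have := ltn_ord (fe ord_max).
  have : val (fe ord0) != val (fe ord_max) by [].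
  rewrite /le3; case: he => H; have := H ord0; have := H ord_max => /=;
  by case: (val (fe ord0)) => [|[|[|?]]]; case: (val (fe ord_max)) => [|[|[|?]]].
by case/orP: key => /andP [/eqP e0 /eqP e1]; [apply: Or32 | apply: Or33];
  apply: horn_eq => u; case: (I2P u) => ->; apply: val_inj.
Qed.

Section WeakClosure.
Variable C : category.
Variable W : cmarking C.
Arguments W : clear implicits.
Variable HW : forall x, W x x (cid x).

Lemma pair_arr_W X0 X1 X2 (g1 : Hom X0 X1) (g2 : Hom X1 X2) a b :
  W _ _ g1 -> W _ _ g2 -> W _ _ (ccomp g2 g1) -> WA W (pair_arr g1 g2 a b).
Proof. by move=> w1 w2 w12; case: a => [[|[|[|a]]] ?]; case: b => [[|[|[|b]]] ?]. Qed.

Section HornFiller.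
Hypothesis Wcomp : comp_closed W.
Variable h : sMap Horn21 (cnerve C).
Hypothesis hm : forall t : Horn21 1, cmark W (smap h t).

Definition horn_obj (i : 'I_3) := cob (smap h (horn_vertex i)) ord0.

Lemma cob_horn (e : Horn21 1) (i : 'I_2) : cob (smap h e) i = horn_obj (proj1_sig (proj1_sig e) i).
Proof.
rewrite /horn_obj.
have -> : horn_vertex (proj1_sig (proj1_sig e) i) = sact (mono_vertex i) e by apply: horn_eq.
by rewrite (smapP h).
Qed.

Definition horn_hom (e : Horn21 1) :
  Hom (horn_obj (proj1_sig (proj1_sig e) ord0)) (horn_obj (proj1_sig (proj1_sig e) ord_max)) :=
  castH (cob_horn e ord0) (cob_horn e ord_max) (hom (arr1 (smap h e))).

Lemma mkArr_horn_hom e : mkArr (horn_hom e) = arr1 (smap h e).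
Proof. rewrite /horn_hom mkArr_castH; exact: (mkArr_hom (arr1 (smap h e))). Qed.

Let G1 : Hom (horn_obj ord0) (horn_obj o1) := horn_hom horn01.
Let G2 : Hom (horn_obj o1) (horn_obj o2) := horn_hom horn12.

Lemma pair_obj_horn a : pair_obj (horn_obj ord0) (horn_obj o1) (horn_obj o2) a = horn_obj a.
Proof. by case: a => [[|[|[|a]]] ?] //=; congr horn_obj; apply: val_inj. Qed.

Lemma horn_arr (e : Horn21 1) :
  arr1 (smap h e) = pair_arr G1 G2 (proj1_sig (proj1_sig e) ord0) (proj1_sig (proj1_sig e) ord_max).
Proof.
case: (horn_edges e) => ->; last 2 first.
- by rewrite -mkArr_horn_hom.
- by rewrite -mkArr_horn_hom.
set a := proj1_sig (proj1_sig e) ord0.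
rewrite /arr1 (arr_smap (t := sdeg) h _ _ (leqnn ord0)) arr_id (diagram_id (pair_diagram G1 G2)) //.
by rewrite pair_obj_horn.
Qed.

Definition horn_filler : sMap Delta2 (cnerve C) := diagram_map (pair_diagram G1 G2).

Lemma horn_filler_extends m (t : Horn21 m) : smap horn_filler (proj1_sig t) = smap h t.
Proof.
apply: csimp_ext => i j hij.
by rewrite arr_diagram_simplex -arr1_sact_edge horn_arr.
Qed.

Lemma horn_filler_marked (t : Delta2 1) : cmark W (smap horn_filler t).
Proof.
have W1 : W _ _ G1 :=
  WA_castH (u := arr1 (smap h horn01)) (cob_horn horn01 ord0) (cob_horn horn01 ord_max) (hm _).
have W2 : W _ _ G2 :=
  WA_castH (u := arr1 (smap h horn12)) (cob_horn horn12 ord0) (cob_horn horn12 ord_max) (hm _).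
change (WA W (arr1 (smap horn_filler t))).
by rewrite /arr1 arr_diagram_simplex; apply: pair_arr_W => //; apply: Wcomp.
Qed.

End HornFiller.

Lemma weakly_closed_of_comp_closed : comp_closed W -> weakly_closed (marked_nerve HW).
Proof.
move=> Wcomp h hm; exists (horn_filler h); split.
- exact: horn_filler_extends.
- exact: horn_filler_marked.
Qed.

Lemma comp_closed_of_weakly_closed : weakly_closed (marked_nerve HW) -> comp_closed W.
Proof.
move=> wc x y z g f wf wg.
pose D := diagram_map (pair_diagram f g).
pose hD : sMap Horn21 (cnerve C) :=
  @SMap Horn21 (cnerve C) (fun m t => smap D (proj1_sig t))
    (fun m n t x => smapP D t (proj1_sig x)).
have hDm : forall t : Horn21 1, cmark W (smap hD t).
  move=> t; change (WA W (arr1 (smap D (proj1_sig t)))).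
  rewrite /arr1 arr_diagram_simplex; case: (horn_edges t) => -> //=.
  by rewrite (diagram_id (pair_diagram f g)).
have [G [hG GW]] := wc hD hDm.
have e01 : arr (smap G delta_top) (isT : (ord0 : 'I_3) <= o1) = mkArr f.
  by rewrite -arr1_sact_edge (hG _ horn01) /arr1 arr_diagram_simplex.
have e12 : arr (smap G delta_top) (isT : o1 <= o2) = mkArr g.
  by rewrite -arr1_sact_edge (hG _ horn12) /arr1 arr_diagram_simplex.
have := arr_comp (smap G delta_top) (isT : (ord0 : 'I_3) <= o1) (isT : o1 <= o2)
  (isT : (ord0 : 'I_3) <= o2).
rewrite e01 e12 => /Acomp_fun e02.
have := GW (delta_edge (isT : (ord0 : 'I_3) <= o2)).
change (WA W (arr1 (smap G (sact (mono_edge (isT : (ord0 : 'I_3) <= o2)) delta_top))) ->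
        W _ _ (ccomp g f)).
by rewrite arr1_sact_edge e02.
Qed.

Lemma weakly_closed_iff : weakly_closed (marked_nerve HW) <-> comp_closed W.
Proof. by split; [apply: comp_closed_of_weakly_closed | apply: weakly_closed_of_comp_closed]. Qed.

End WeakClosure.

(** * Cocones from a proper calculus of left fractions *)

Section Cocone.
Variables (C : category) (W : cmarking C).
Arguments W : clear implicits.
Hypothesis HPL : proper_left W.

Lemma proper_left_comp : comp_closed W.
Proof. by case: HPL. Qed.

Lemma proper_left_id x : W x x (cid x).
Proof. by case: HPL. Qed.

Lemma proper_left_square (X Y X' : Obj C) (f : Hom X Y) (w : Hom X X') : W _ _ w ->
  exists (Y' : Obj C) (f' : Hom X' Y') (w' : Hom Y Y'),
    [/\ W _ _ w', ccomp f' w = ccomp w' f & (W _ _ f -> W _ _ f')].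
Proof. by case: HPL => _ _ h _; apply: h. Qed.

Lemma proper_left_cancel (X Y X' : Obj C) (f g : Hom X Y) (w : Hom X' X) :
  W _ _ w -> ccomp f w = ccomp g w ->
  exists (Y' : Obj C) (v : Hom Y Y'), W _ _ v /\ ccomp v f = ccomp v g.
Proof. by case: HPL => _ _ _ h wW e; apply: h; exists X', w. Qed.

(* Condition (iii) applied once per pair, composing the resulting W-maps. *)
Lemma proper_left_cancel_fin (I : finType) (D : I -> Obj C) Y (p q : forall i, Hom (D i) Y) :
  (forall i, exists X' (w : Hom X' (D i)), W _ _ w /\ ccomp (p i) w = ccomp (q i) w) ->
  exists Y' (v : Hom Y Y'), W _ _ v /\ forall i, ccomp v (p i) = ccomp v (q i).
Proof.
move=> H; suff [Y' [v [vW e]]] : exists Y' (v : Hom Y Y'),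
    W _ _ v /\ forall i, i \in enum I -> ccomp v (p i) = ccomp v (q i).
  by exists Y', v; split => // i; apply: e; rewrite mem_enum.
elim: (enum I) Y p q {H} (fun i (_ : i \in enum I) => H i) => [|i l IH] Y p q H.
  by exists Y, (cid Y); split => //; apply: proper_left_id.
have [X' [w [wW e]]] := H i (mem_head _ _).
have [Y1 [v1 [v1W e1]]] := proper_left_cancel wW e.
have [|Y2 [v2 [v2W e2]]] := IH Y1 (fun j => ccomp v1 (p j)) (fun j => ccomp v1 (q j)).
  move=> j jl; have [X'' [w' [w'W e']]] := H j (mem_behead (s := i :: l) jl).
  by exists X'', w'; split => //; rewrite -!ccompA e'.
exists Y2, (ccomp v2 v1); split; first exact: proper_left_comp.
by move=> j; rewrite in_cons => /orP [/eqP -> | jl]; rewrite -!ccompA ?e1 ?e2.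
Qed.

(* In the application T is the set of vertices of L^n_k, R is inclusion away from the
   top vertex, base = {k,...,n}, core a = a ∩ base, and Wleg a means n ∈ a, i.e. that
   the edge from a to the top vertex is marked. *)
Variables (T : finType) (R : rel T) (Ob : T -> Obj C).
Variable F : forall a b, R a b -> Hom (Ob a) (Ob b).
Hypothesis R_refl_l : forall a b, R a b -> R a a.
Hypothesis R_trans : forall a b c, R a b -> R b c -> R a c.
Hypothesis F_id : forall a (h : R a a), F h = cid (Ob a).
Hypothesis F_comp : forall a b c (h1 : R a b) (h2 : R b c) (h3 : R a c),
  F h3 = ccomp (F h2) (F h1).
Variable size : T -> nat.
Hypothesis size_lt : forall a b, R a b -> a != b -> size a < size b.
Variables (base : T) (core : T -> T).
Hypothesis core_le : forall a, R a a -> R (core a) a.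
Hypothesis core_base : forall a, R a a -> R (core a) base.
Hypothesis core_mono : forall a b, R a b -> R (core a) (core b).
Hypothesis core_W : forall a (h : R (core a) a), W _ _ (F h).
Variable Wleg : pred T.
Hypothesis Wleg_core : forall a, R a a -> Wleg a -> Wleg (core a).
Hypothesis Wleg_base : forall c (h : R c base), Wleg c -> W _ _ (F h).

Lemma F_pi a b (h h' : R a b) : F h = F h'.
Proof. by rewrite (bool_irrelevance h h'). Qed.

Definition cocone_on (S : {set T}) :=
  exists Y (lam : forall a, a \in S -> Hom (Ob a) Y),
    (forall a b (h : R a b) pa pb, ccomp (lam b pb) (F h) = lam a pa) /\
    (forall a pa, R a a -> Wleg a -> W _ _ (lam a pa)).

Definition admissible (S : {set T}) :=
  [/\ [set a | R a base] \subset S, (forall a b, b \in S -> R a b -> a \in S)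
    & (forall a, a \in S -> R a a)].

Lemma cocone_base : admissible [set a | R a base] /\ cocone_on [set a | R a base].
Proof.
have inP a : a \in [set a | R a base] -> R a base by rewrite inE.
split; first split => //.
- by move=> a b; rewrite !inE => hb hab; apply: R_trans hab hb.
- by move=> a /inP /R_refl_l.
exists (Ob base), (fun a pa => F (inP a pa)); split.
- by move=> a b h pa pb; rewrite -(F_comp h (inP b pb) (inP a pa)).
- by move=> a pa _ Ga; apply: Wleg_base.
Qed.

Lemma in_setU1_neq (S : {set T}) z a : a \in z |: S -> a <> z -> a \in S.
Proof. by rewrite in_setU1 => /orP [/eqP -> | //]. Qed.

Lemma admissible_setU1 (S : {set T}) z : admissible S -> R z z ->
  (forall a, R a z -> a != z -> a \in S) -> admissible (z |: S).
Proof.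
case=> baseS Sdown SR Rzz belowS; split.
- by apply: subset_trans baseS _; apply/subsetP => a aS; rewrite in_setU1 aS orbT.
- move=> a b; rewrite !in_setU1 => /orP [/eqP -> | bS] Rab.
    by case: (eqVneq a z) => [//|anz]; rewrite (belowS a Rab anz) orbT.
  by rewrite (Sdown a b bS Rab) orbT.
- by move=> a; rewrite in_setU1 => /orP [/eqP -> // | /SR].
Qed.

Section ConeStep.
Variables (S : {set T}) (z : T) (Y : Obj C) (lam : forall a, a \in S -> Hom (Ob a) Y).
Arguments lam : clear implicits.
Hypothesis lamN : forall a b (h : R a b) pa pb, ccomp (lam b pb) (F h) = lam a pa.
Hypothesis lamW : forall a pa, R a a -> Wleg a -> W _ _ (lam a pa).
Hypothesis baseS : [set a | R a base] \subset S.
Hypothesis Sdown : forall a b, b \in S -> R a b -> a \in S.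
Hypothesis Rzz : R z z.
Hypothesis zS : z \notin S.

Lemma core_in a : R a a -> core a \in S.
Proof. by move=> Raa; apply: (subsetP baseS); rewrite inE; apply: core_base. Qed.

(* Condition (ii') applied to the W-map [core z -> z] gives a candidate leg at z;
   condition (iii) then makes it agree with the legs of the elements below z. *)
Lemma leg_extension : exists Y' (mu : Hom (Ob z) Y') (v : Hom Y Y'),
  [/\ W _ _ v, (Wleg z -> W _ _ mu) &
      forall a (pa : a \in S) (h : R a z), ccomp mu (F h) = ccomp v (lam a pa)].
Proof.
have Rcz := core_le Rzz.
have [Y2 [mu2 [v2 [v2W e2 pW]]]] := proper_left_square (lam (core z) (core_in Rzz)) (core_W Rcz).
pose I := {a : T | (a \in S) && R a z}.
have IS (i : I) : val i \in S by case/andP: (valP i).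
have IR (i : I) : R (val i) z by case/andP: (valP i).
have [|Y3 [V [VW eV]]] := @proper_left_cancel_fin I (fun i => Ob (val i)) Y2
    (fun i => ccomp mu2 (F (IR i))) (fun i => ccomp v2 (lam (val i) (IS i))).
  move=> i; set a := val i.
  have Raa : R a a := R_refl_l (IR i).
  exists (Ob (core a)), (F (core_le Raa)); split; first exact: core_W.
  rewrite -!ccompA (lamN _ (core_in Raa)) -(F_comp _ _ (R_trans (core_le Raa) (IR i))).
  by rewrite (F_comp (core_mono (IR i)) Rcz) ccompA e2 -ccompA (lamN _ (core_in Raa)).
exists Y3, (ccomp V mu2), (ccomp V v2); split.
- exact: proper_left_comp.
- move=> Gz; apply: proper_left_comp => //; apply: pW; apply: lamW => //.
  + exact: R_refl_l (core_base Rzz).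
  + exact: Wleg_core.
- move=> a pa h; pose i0 : I := exist _ a (introT andP (conj pa h)).
  by have := eV i0; rewrite (F_pi (IR i0) h) /= (bool_irrelevance (IS i0) pa) -!ccompA.
Qed.

Lemma cocone_setU1 : (forall a, R a z -> a != z -> a \in S) -> cocone_on (z |: S).
Proof.
move=> belowS.
have [Y' [mu [v [vW muW legE]]]] := leg_extension.
pose lam' a (pa : a \in z |: S) :=
  match excluded_middle_informative (a = z) with
  | left e => castH (f_equal Ob (esym e)) erefl mu
  | right ne => ccomp v (lam a (in_setU1_neq pa ne))
  end.
have lamz pa : lam' z pa = mu.
  by rewrite /lam'; case: excluded_middle_informative => [e|//]; rewrite castH_id.
have lamS a pa (pa' : a \in S) : a != z -> lam' a pa = ccomp v (lam a pa').
  move=> /eqP anz; rewrite /lam'; case: excluded_middle_informative => [//|ne].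
  by rewrite (bool_irrelevance (in_setU1_neq pa ne) pa').
exists Y', lam'; split => [a b h pa pb | a pa Raa Ga].
- case: (eqVneq b z) => [ebz | bnz].
    subst b; rewrite lamz; case: (eqVneq a z) => [eaz | anz].
      by subst a; rewrite lamz F_id ccomp_id_r.
    by rewrite (lamS _ _ (belowS a h anz) anz); apply: legE.
  have bS : b \in S := in_setU1_neq pb (elimN eqP bnz).
  have aS : a \in S := Sdown bS h.
  have anz : a != z by apply: contraTneq aS => ->.
  by rewrite (lamS _ _ bS bnz) (lamS _ _ aS anz) -ccompA lamN.
- case: (eqVneq a z) => [eaz | anz]; first by subst a; rewrite lamz; apply: muW.
  have aS : a \in S := in_setU1_neq pa (elimN eqP anz).
  by rewrite (lamS _ _ aS anz); apply: proper_left_comp => //; apply: lamW.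
Qed.

End ConeStep.

Lemma cocone_exists : exists Y (lam : forall a, R a a -> Hom (Ob a) Y),
  (forall a b (h : R a b) pa pb, ccomp (lam b pb) (F h) = lam a pa) /\
  (forall a pa, Wleg a -> W _ _ (lam a pa)).
Proof.
suff grow m (S : {set T}) : #|T| - #|S| <= m -> admissible S -> cocone_on S ->
    exists S' : {set T}, (forall a, R a a -> a \in S') /\ cocone_on S'.
  have [aS iS] := cocone_base.
  have [S [allS [Y [lam [lamN lamW]]]]] := grow _ _ (leqnn _) aS iS.
  exists Y, (fun a pa => lam a (allS a pa)); split => [a b h pa pb|a pa Ga].
  - exact: lamN.
  - exact: lamW.
elim: m S => [|m IH] S hm aS iS;
  (case: (pickP (fun a => R a a && (a \notin S))) => [a0 Ha0 | none]; last first);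
  try by exists S; split => // a Raa; apply/negPn/negP => aS'; have := none a; rewrite Raa aS'.
- have : #|S| < #|T|.
    apply: proper_card; apply/properP; split; first exact: subset_predT.
    by exists a0; case/andP: Ha0.
  by rewrite -subn_gt0; move: hm; case: (#|T| - #|S|).
- have [z /andP [Rzz zS] zmin] := @arg_minnP T a0 (fun a => R a a && (a \notin S)) size Ha0.
  have belowS a : R a z -> a != z -> a \in S.
    move=> Raz anz; apply/negPn/negP => aS'.
    by have := zmin a (introT andP (conj (R_refl_l Raz) aS')); rewrite leqNgt size_lt.
  have [Y [lam [lamN lamW]]] := iS; have [baseS Sdown _] := aS.
  apply: (IH _ _ (admissible_setU1 aS Rzz belowS)
                 (cocone_setU1 lamN lamW baseS Sdown Rzz zS belowS)).
  by rewrite cardsU1 zS add1n subnS; move: hm; case: (#|T| - #|S|).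
Qed.

End Cocone.

(** * The marked posets L^n_k and R^n_k *)

Section SetExtrema.
Variable n : nat.
Implicit Types A B : {set 'I_n.+1}.

Lemma setmax_ub A (i : 'I_n.+1) : i \in A -> i <= setmax A.
Proof. by move=> iA; apply: (leq_bigmax_cond i). Qed.

Lemma setmax_in A (i0 : 'I_n.+1) : i0 \in A -> exists2 i : 'I_n.+1, i \in A & setmax A = i.
Proof.
move=> i0A; have : 0 < #|A| by apply/card_gt0P; exists i0.
by case/(eq_bigmax_cond (fun i : 'I_n.+1 => nat_of_ord i)) => i iA e; exists i.
Qed.

Lemma setmax_le A : setmax A <= n.
Proof. by apply/bigmax_leqP => i _; rewrite -ltnS. Qed.

Lemma setmax_top A : ord_max \in A -> setmax A = n.
Proof. by move=> h; apply/eqP; rewrite eqn_leq setmax_le (setmax_ub h). Qed.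

Lemma setmax_topP A (i0 : 'I_n.+1) : i0 \in A -> setmax A = n -> ord_max \in A.
Proof.
by move=> /setmax_in [i iA ->] ein; have -> : ord_max = i by apply: val_inj.
Qed.

Lemma setmax_setI A B (k : 'I_n.+1) : k \in A -> (forall i : 'I_n.+1, k <= i -> i \in B) ->
  setmax (A :&: B) = setmax A.
Proof.
move=> kA hB; apply/eqP; rewrite eqn_leq; apply/andP; split.
  by apply/bigmax_leqP => i; rewrite inE => /andP [iA _]; apply: setmax_ub.
case: (setmax_in kA) => i iA ei; rewrite ei; apply: setmax_ub.
by rewrite inE iA hB // -ei setmax_ub.
Qed.

Lemma setmax_rev A : setmax (@rev_ord n.+1 @: A) = n - setmin A.
Proof.
rewrite /setmax big_imset /=; last by move=> i j _ _; apply: rev_ord_inj.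
rewrite /setmin (big_morph (fun m => n - m) (id1 := 0) (op1 := maxn) (op2 := minn) (id2 := n)).
- by apply: eq_bigr => i _; rewrite subSS.
- by move=> a b; lia.
- by rewrite subnn.
Qed.

Lemma setmin_le A : setmin A <= n.
Proof.
by rewrite /setmin; elim/big_ind: _ => // [x y hx hy | i _]; [rewrite geq_min hx | apply: leq_ord].
Qed.

Lemma rev_imsetK A : @rev_ord n.+1 @: (@rev_ord n.+1 @: A) = A.
Proof. by rewrite -imset_comp (eq_imset _ rev_ordK) imset_id. Qed.

Lemma setmin_rev A : setmin (@rev_ord n.+1 @: A) = n - setmax A.
Proof. by rewrite -{2}(rev_imsetK A) setmax_rev subKn // setmin_le. Qed.

Lemma rev_subset A B : (@rev_ord n.+1 @: A \subset @rev_ord n.+1 @: B) = (A \subset B).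
Proof.
apply/idP/idP; last exact: imsetS.
by move=> /(imsetS (@rev_ord n.+1)); rewrite !rev_imsetK.
Qed.

End SetExtrema.

Section SubsetPosets.
Variables (n : nat) (k : 'I_n.+1).

Definition Lrel : rel (Lvert k) := fun A B => proj1_sig A \subset proj1_sig B.
Definition Rrel : rel (Lvert k) := fun A B => proj1_sig B \subset proj1_sig A.
Definition Lmk (A B : Lvert k) : Prop := setmax (proj1_sig A) = setmax (proj1_sig B).
Definition Rmk (A B : Lvert k) : Prop := setmin (proj1_sig A) = setmin (proj1_sig B).

Lemma Lrel_refl : reflexive Lrel. Proof. by move=> a; apply: subxx. Qed.
Lemma Lrel_trans a b c : Lrel a b -> Lrel b c -> Lrel a c. Proof. exact: subset_trans. Qed.
Lemma Rrel_refl : reflexive Rrel. Proof. by move=> a; apply: subxx. Qed.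
Lemma Rrel_trans a b c : Rrel a b -> Rrel b c -> Rrel a c.
Proof. by move=> hab hbc; apply: subset_trans hbc hab. Qed.

Lemma Lvert_top (a : Lvert k) : (forall i, i \in proj1_sig a) -> a = Ltop k.
Proof. by move=> H; apply: val_inj; apply/setP => i; rewrite H inE. Qed.

Lemma Lrel_top (a : Lvert k) : Lrel (Ltop k) a -> a = Ltop k.
Proof. by move=> h; apply: Lvert_top => i; apply: (subsetP h); rewrite inE. Qed.

Lemma Lvert_ntop (a : Lvert k) (i : 'I_n.+1) : i \notin proj1_sig a -> a != Ltop k.
Proof. by apply: contraNneq => ->; rewrite inE. Qed.

Definition Lvert_of (A : {set 'I_n.+1}) (h : k \in A) : Lvert k := exist _ A h.

Definition Lsingle : Lvert k := Lvert_of (set11 k).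

Lemma Lvert_seq_k (l : seq nat) : val k \in l -> k \in [set i : 'I_n.+1 | val i \in l].
Proof. by rewrite inE. Qed.

Definition Lvert_seq (l : seq nat) (hk : val k \in l) : Lvert k := Lvert_of (Lvert_seq_k hk).

Lemma Lvert_seq_mem l hk (i : 'I_n.+1) : (i \in proj1_sig (@Lvert_seq l hk)) = (val i \in l).
Proof. by rewrite inE. Qed.

Lemma Lrel_seq l1 l2 hk1 hk2 : all (mem l2) l1 -> Lrel (@Lvert_seq l1 hk1) (@Lvert_seq l2 hk2).
Proof. by move/allP => H; apply/subsetP => i; rewrite !inE; apply: H. Qed.

Lemma Lrel_top_r (a : Lvert k) : Lrel a (Ltop k).
Proof. exact: subsetT. Qed.

Lemma Lsingle_ntop : 0 < n -> Lsingle <> Ltop k.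
Proof.
move=> n0 /(congr1 (fun a : Lvert k => #|proj1_sig a|)) /=.
by rewrite cards1 cardsT card_ord => -[n00]; rewrite -n00 in n0.
Qed.

End SubsetPosets.

Lemma rlp_LJ_iff (C : category) (W : cmarking C) (HW : forall x, W x x (cid x))
    n (k : 'I_n.+1) : 0 < n ->
  rlp (LJ_incl k) (marked_nerve HW) <-> extendable (@Lrel n k) W (@Lmk n k) (Ltop k).
Proof.
move=> n0; exact: (rlp_omit_iff HW (mk := @Lmk n k) (fun _ => erefl) (@Lrel_refl n k)
                        (@Lrel_trans n k) (Lsingle_ntop (k := k) n0)).
Qed.

Lemma rlp_RJ_iff (C : category) (W : cmarking C) (HW : forall x, W x x (cid x))
    n (k : 'I_n.+1) : 0 < n ->
  rlp (RJ_incl k) (marked_nerve HW) <-> extendable (@Rrel n k) W (@Rmk n k) (Ltop k).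
Proof.
move=> n0; exact: (rlp_omit_iff HW (mk := @Rmk n k) (fun _ => erefl) (@Rrel_refl n k)
                        (@Rrel_trans n k) (Lsingle_ntop (k := k) n0)).
Qed.

(* i ↦ n - i identifies R^n_k with the opposite of L^n_{n-k}. *)
Section LvertReversal.
Variables (n : nat) (k : 'I_n.+1).

Lemma rev_k_mem (b : Lvert (rev_ord k)) : k \in @rev_ord n.+1 @: proj1_sig b.
Proof. by rewrite -{1}(rev_ordK k) imset_f // (proj2_sig b). Qed.

Definition Lrev (a : Lvert k) : Lvert (rev_ord k) :=
  Lvert_of (imset_f (@rev_ord n.+1) (proj2_sig a)).
Definition Lunrev (b : Lvert (rev_ord k)) : Lvert k := Lvert_of (rev_k_mem b).

Lemma LrevK : cancel Lrev Lunrev.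
Proof. by move=> a; apply: val_inj; apply: rev_imsetK. Qed.

Lemma LunrevK : cancel Lunrev Lrev.
Proof. by move=> b; apply: val_inj; apply: rev_imsetK. Qed.

Lemma Lrev_top : Lrev (Ltop k) = Ltop (rev_ord k).
Proof. by apply: Lvert_top => i; rewrite -[i]rev_ordK imset_f ?inE. Qed.

Lemma Lunrev_top : Lunrev (Ltop (rev_ord k)) = Ltop k.
Proof. by rewrite -Lrev_top LrevK. Qed.

Lemma Lrel_Lrev a b : Lrel (Lrev a) (Lrev b) = Rrel b a.
Proof. exact: rev_subset. Qed.

Lemma Rrel_Lunrev a b : Rrel (Lunrev a) (Lunrev b) = Lrel b a.
Proof. exact: rev_subset. Qed.

Lemma Lmk_Lrev a b : Lmk (Lrev a) (Lrev b) <-> Rmk b a.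
Proof.
rewrite /Lmk /Rmk /= !setmax_rev.
by split=> [/(congr1 (subn n)) | ->]; rewrite ?subKn ?setmin_le.
Qed.

Lemma Rmk_Lunrev a b : Rmk (Lunrev a) (Lunrev b) <-> Lmk b a.
Proof.
rewrite /Lmk /Rmk /= !setmin_rev.
by split=> [/(congr1 (subn n)) | ->]; rewrite ?subKn ?setmax_le.
Qed.

Lemma extendable_R_iff_L_op (C : category) (W : cmarking C) :
  extendable (@Rrel n k) W (@Rmk n k) (Ltop k) <->
  extendable (@Lrel n (rev_ord k)) (op_marking W) (@Lmk n (rev_ord k)) (Ltop (rev_ord k)).
Proof.
split=> hext.
- by rewrite -Lrev_top; apply: (extendable_op LrevK LunrevK Lrel_Lrev Lmk_Lrev hext).
- apply/extendable_op_op; rewrite -Lunrev_top.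
  exact: (extendable_op LunrevK LrevK Rrel_Lunrev Rmk_Lunrev hext).
Qed.

End LvertReversal.

(** * Lifting from a proper calculus of left fractions *)

Section LeftExtension.
Variables (C : category) (W : cmarking C).
Arguments W : clear implicits.
Hypothesis HPL : proper_left W.
Variables (n : nat) (k : 'I_n.+1).
Hypothesis kpos : 0 < k.
Variables (Ob : Lvert k -> Obj C) (E : Lvert k -> Lvert k -> Arr C).
Hypothesis hD : diagram_on (@Lrel n k) (fun a => a <> Ltop k) Ob E.
Hypothesis hM : marked_on (@Lrel n k) W (@Lmk n k) (fun a => a <> Ltop k) E.

Notation top := (Ltop k).

Definition Lbelow (a b : Lvert k) := [&& Lrel a b, a != top & b != top].

Lemma Lbelow_le a b : Lbelow a b -> Lrel a b. Proof. by case/and3P. Qed.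
Lemma Lbelow_l a b : Lbelow a b -> a <> top. Proof. by case/and3P => _ /eqP. Qed.
Lemma Lbelow_r a b : Lbelow a b -> b <> top. Proof. by case/and3P => _ _ /eqP. Qed.

Definition Lhom a b (h : Lbelow a b) : Hom (Ob a) (Ob b) :=
  castH (diagram_src hD (Lbelow_l h) (Lbelow_r h) (Lbelow_le h))
        (diagram_tgt hD (Lbelow_l h) (Lbelow_r h) (Lbelow_le h)) (hom (E a b)).

Lemma mkArr_Lhom a b (h : Lbelow a b) : mkArr (Lhom h) = E a b.
Proof. by rewrite /Lhom mkArr_castH mkArr_hom. Qed.

Lemma Lhom_W a b (h : Lbelow a b) : Lmk a b -> W _ _ (Lhom h).
Proof.
by move=> hm; apply: WA_castH; apply: hM => //;
  [apply: Lbelow_l h | apply: Lbelow_r h | apply: Lbelow_le h].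
Qed.

Lemma Lbase_k : k \in [set i : 'I_n.+1 | k <= i].
Proof. by rewrite inE. Qed.

Definition Lbase : Lvert k := Lvert_of Lbase_k.

Lemma Lcore_k (a : Lvert k) : k \in proj1_sig a :&: proj1_sig Lbase.
Proof. by rewrite inE (proj2_sig a) Lbase_k. Qed.

Definition Lcore (a : Lvert k) : Lvert k := Lvert_of (Lcore_k a).

Lemma Lcore_ntop a : Lcore a != top.
Proof. by apply: (@Lvert_ntop _ _ _ ord0); rewrite !inE; apply/nandP; right; rewrite -ltnNge. Qed.

Lemma Lbase_ntop : Lbase != top.
Proof. by apply: (@Lvert_ntop _ _ _ ord0); rewrite inE -ltnNge. Qed.

Lemma Lbelow_refl_l a b : Lbelow a b -> Lbelow a a.
Proof. by case/and3P => _ ha _; rewrite /Lbelow Lrel_refl ha. Qed.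

Lemma Lbelow_trans a b c : Lbelow a b -> Lbelow b c -> Lbelow a c.
Proof.
by case/and3P => hab ha _ /and3P [hbc _ hc]; rewrite /Lbelow (Lrel_trans hab hbc) ha hc.
Qed.

Lemma Lhom_id a (h : Lbelow a a) : Lhom h = cid (Ob a).
Proof. by apply: castH_hom; apply: (diagram_id hD); apply: Lbelow_l h. Qed.

Lemma Lhom_comp a b c (h1 : Lbelow a b) (h2 : Lbelow b c) (h3 : Lbelow a c) :
  Lhom h3 = ccomp (Lhom h2) (Lhom h1).
Proof.
apply: castH_Acomp; apply: (diagram_comp hD);
  by [apply: Lbelow_l h1 | apply: Lbelow_l h2 | apply: Lbelow_r h2
     | apply: Lbelow_le h1 | apply: Lbelow_le h2].
Qed.

Lemma Lbelow_card a b : Lbelow a b -> a != b -> #|proj1_sig a| < #|proj1_sig b|.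
Proof.
by move=> /Lbelow_le hab neq; apply: proper_card; rewrite properEneq; apply/andP; split => //.
Qed.

Lemma Lcore_le a : Lbelow a a -> Lbelow (Lcore a) a.
Proof. by case/and3P => _ ha _; rewrite /Lbelow Lcore_ntop ha /Lrel subsetIl. Qed.

Lemma Lcore_base a : Lbelow a a -> Lbelow (Lcore a) Lbase.
Proof. by rewrite /Lbelow Lcore_ntop Lbase_ntop /Lrel subsetIr. Qed.

Lemma Lcore_mono a b : Lbelow a b -> Lbelow (Lcore a) (Lcore b).
Proof. by case/and3P => hab _ _; rewrite /Lbelow !Lcore_ntop /Lrel setSI. Qed.

Lemma Lcore_W a (h : Lbelow (Lcore a) a) : W _ _ (Lhom h).
Proof.
by apply: Lhom_W; apply: setmax_setI (proj2_sig a) _ => i; rewrite inE.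
Qed.

Lemma Lcore_max a : Lbelow a a -> ord_max \in proj1_sig a -> ord_max \in proj1_sig (Lcore a).
Proof. by move=> _ h; rewrite /= !inE h /=; apply: leq_ord. Qed.

Lemma Lbase_W c (h : Lbelow c Lbase) : ord_max \in proj1_sig c -> W _ _ (Lhom h).
Proof. by move=> hc; apply: Lhom_W; rewrite /Lmk !setmax_top //= inE -ltnS. Qed.

Lemma cocone_L : exists Y (lam : forall a, Lbelow a a -> Hom (Ob a) Y),
  (forall a b (h : Lbelow a b) pa pb, ccomp (lam b pb) (Lhom h) = lam a pa) /\
  (forall (a : Lvert k) pa, ord_max \in proj1_sig a -> W _ _ (lam a pa)).
Proof.
exact: (cocone_exists HPL Lbelow_refl_l Lbelow_trans Lhom_id Lhom_comp Lbelow_card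
          Lcore_le Lcore_base Lcore_mono Lcore_W Lcore_max Lbase_W).
Qed.

Section Apex.
Variables (Y : Obj C) (lam : forall a, Lbelow a a -> Hom (Ob a) Y).
Arguments lam : clear implicits.
Hypothesis lamN : forall a b (h : Lbelow a b) pa pb, ccomp (lam b pb) (Lhom h) = lam a pa.
Hypothesis lamW : forall (a : Lvert k) pa, ord_max \in proj1_sig a -> W _ _ (lam a pa).

Lemma Lbelow_ntop a : a != top -> Lbelow a a.
Proof. by move=> ha; rewrite /Lbelow Lrel_refl ha. Qed.

Lemma Lrel_ntop a b : Lrel a b -> b != top -> a != top.
Proof. by move=> hab; apply: contra => /eqP ea; rewrite ea in hab; rewrite (Lrel_top hab). Qed.

Definition apex_obj a := if a == top then Y else Ob a.

Definition leg a : Arr C :=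
  if excluded_middle_informative (Lbelow a a) is left h then mkArr (lam a h) else mkArr (cid Y).

Definition apex_arr a b :=
  if b == top then (if a == top then mkArr (cid Y) else leg a) else E a b.

Lemma legE a (h : Lbelow a a) : leg a = mkArr (lam a h).
Proof.
by rewrite /leg; case: excluded_middle_informative => [h'|//]; rewrite (bool_irrelevance h' h).
Qed.

Lemma apex_arr_leg a (ha : a != top) : apex_arr a top = mkArr (lam a (Lbelow_ntop ha)).
Proof. by rewrite /apex_arr eqxx (negbTE ha) (legE (Lbelow_ntop ha)). Qed.

Lemma apex_arr_ntop a b : b != top -> apex_arr a b = E a b.
Proof. by rewrite /apex_arr => /negbTE ->. Qed.

Lemma apex_obj_ntop a : a != top -> apex_obj a = Ob a.
Proof. by rewrite /apex_obj => /negbTE ->. Qed.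

Lemma apex_diagram : diagram_on (@Lrel n k) (fun _ => True) apex_obj apex_arr.
Proof.
have ntop a : a != top -> a <> top by move/eqP.
split.
- move=> a b _ _ hab; case: (eqVneq b top) => [-> | nb].
    case: (eqVneq a top) => [-> | na]; first by rewrite /apex_arr /apex_obj eqxx.
    by rewrite (apex_arr_leg na) apex_obj_ntop.
  have na := Lrel_ntop hab nb.
  by rewrite apex_arr_ntop // apex_obj_ntop // (diagram_src hD) //; apply: ntop.
- move=> a b _ _ hab; case: (eqVneq b top) => [-> | nb].
    case: (eqVneq a top) => [-> | na]; first by rewrite /apex_arr /apex_obj eqxx.
    by rewrite (apex_arr_leg na) /apex_obj eqxx.
  have na := Lrel_ntop hab nb.
  by rewrite apex_arr_ntop // apex_obj_ntop // (diagram_tgt hD) //; apply: ntop.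
- move=> a _; case: (eqVneq a top) => [-> | na]; first by rewrite /apex_arr /apex_obj eqxx.
  by rewrite apex_arr_ntop // apex_obj_ntop // (diagram_id hD) //; apply: ntop.
- move=> a b c _ _ _ hab hbc; case: (eqVneq c top) => [ec | nc]; last first.
    have nb := Lrel_ntop hbc nc; have na := Lrel_ntop hab nb.
    by rewrite !apex_arr_ntop //; apply: (diagram_comp hD) => //; apply: ntop.
  subst c; case: (eqVneq b top) => [eb | nb].
    subst b; case: (eqVneq a top) => [-> | na]; first by rewrite /apex_arr eqxx; apply: Acomp_idl.
    by rewrite (apex_arr_leg na) /apex_arr eqxx; apply: Acomp_idr.
  have na := Lrel_ntop hab nb; have hR : Lbelow a b by rewrite /Lbelow hab na nb.
  rewrite (apex_arr_leg na) (apex_arr_leg nb) apex_arr_ntop // -(mkArr_Lhom hR).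
  by rewrite -(lamN hR (Lbelow_ntop na) (Lbelow_ntop nb)); apply: Acomp_mk.
Qed.

Lemma apex_marked : marked_on (@Lrel n k) W (@Lmk n k) (fun _ => True) apex_arr.
Proof.
move=> a b _ _ hab hm; case: (eqVneq b top) => [eb | nb].
  subst b; case: (eqVneq a top) => [-> | na].
    by rewrite /apex_arr eqxx; apply: proper_left_id.
  rewrite (apex_arr_leg na); apply: lamW; apply: (setmax_topP (proj2_sig a)).
  by rewrite hm setmax_top //= inE.
rewrite apex_arr_ntop //; apply: hM => //; apply/eqP => //.
exact: Lrel_ntop hab nb.
Qed.

End Apex.

Lemma left_extension : exists Ob' E',
  [/\ diagram_on (@Lrel n k) (fun _ => True) Ob' E',
      marked_on (@Lrel n k) W (@Lmk n k) (fun _ => True) E'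
    & forall a b, a <> top -> b <> top -> Lrel a b -> E' a b = E a b].
Proof.
have [Y [lam [lamN lamW]]] := cocone_L.
exists (apex_obj Y), (apex_arr lam); split.
- exact: apex_diagram.
- exact: apex_marked.
- by move=> a b _ /eqP nb _; rewrite apex_arr_ntop.
Qed.

End LeftExtension.

Lemma left_extendable (C : category) (W : cmarking C) n (k : 'I_n.+1) :
  proper_left W -> 0 < k -> extendable (@Lrel n k) W (@Lmk n k) (Ltop k).
Proof. by move=> HPL kpos Ob E hD hM; apply: (left_extension HPL kpos hD hM). Qed.

(** * A proper calculus of left fractions from lifting *)

Inductive span_vertex := SpanRoot | SpanLeft | SpanRight.

Definition span_le : rel span_vertex := fun s t =>
  match s, t with
  | SpanRoot, _ | SpanLeft, SpanLeft | SpanRight, SpanRight => true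
  | _, _ => false
  end.

Section SpanDiagram.
Variables (C : category) (X X' Y : Obj C) (w : Hom X X') (f : Hom X Y).

Definition span_obj s := match s with SpanRoot => X | SpanLeft => X' | SpanRight => Y end.

Definition span_arr s t : Arr C :=
  match s, t with
  | SpanRoot, SpanLeft => mkArr w | SpanRoot, SpanRight => mkArr f
  | SpanLeft, SpanLeft => mkArr (cid X') | SpanRight, SpanRight => mkArr (cid Y)
  | _, _ => mkArr (cid X)
  end.

Lemma span_diagram : diagram_on span_le (fun _ => True) span_obj span_arr.
Proof.
split; [by do 2!case | by do 2!case | by case |].
by case; case; case => //= *; first [apply: Acomp_idl | apply: Acomp_idr].
Qed.

End SpanDiagram.

Section SpanFromLifting.
Variables (C : category) (W : cmarking C).
Arguments W : clear implicits.
Variable HW : forall x, W x x (cid x).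
Variables (k j : 'I_3).
Hypotheses (k0 : k != ord0) (j0 : j != ord0) (kj : k != j).
Hypothesis hext : extendable (@Lrel 2 k) W (@Lmk 2 k) (Ltop k).
Variables (X X' Y : Obj C) (w : Hom X X') (f : Hom X Y).
Hypothesis Ww : W _ _ w.
(* For k = 2 the edge {2} ⊆ {1,2} is marked, which requires W f; in exchange the leg
   of {0,2} is marked as well. *)
Hypothesis Wf : k = ord_max -> W _ _ f.

Lemma I3_cases (i : 'I_3) : [|| i == ord0, i == k | i == j].
Proof.
by move: k0 j0 kj; case: i k j => [[|[|[|?]]] ?] [[|[|[|?]]] ?] [[|[|[|?]]] ?].
Qed.

Definition span_vertex_of (a : Lvert k) : span_vertex :=
  if ord0 \in proj1_sig a then SpanLeft else if j \in proj1_sig a then SpanRight else SpanRoot.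

Lemma span_vertex_of_mono a b : a <> Ltop k -> b <> Ltop k -> Lrel a b ->
  span_le (span_vertex_of a) (span_vertex_of b).
Proof.
move=> _ nb hab; rewrite /span_vertex_of.
case h0a: (ord0 \in proj1_sig a); first by rewrite (subsetP hab _ h0a).
case hja: (j \in proj1_sig a); last by case: ifP => //; case: ifP.
rewrite (subsetP hab _ hja); case h0b: (ord0 \in proj1_sig b) => //.
case: nb; apply: Lvert_top => i.
by case/or3P: (I3_cases i) => /eqP ->; rewrite ?(proj2_sig b) ?(subsetP hab _ hja).
Qed.

Lemma span_vertex_of_marked a b : a <> Ltop k -> b <> Ltop k -> Lrel a b -> Lmk a b ->
  WA W (span_arr w f (span_vertex_of a) (span_vertex_of b)).
Proof.
move=> _ _ hab hm; rewrite /span_vertex_of.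
case h0a: (ord0 \in proj1_sig a); case h0b: (ord0 \in proj1_sig b);
  case hja: (j \in proj1_sig a); case hjb: (j \in proj1_sig b); try exact: HW; try exact: Ww.
apply: Wf; apply: val_inj.
have [i ia ei] := setmax_in (proj2_sig a).
have eik : i = k.
  by case/or3P: (I3_cases i) => /eqP ei'; rewrite ei' ?h0a ?hja in ia.
have := setmax_ub hjb; rewrite -hm ei eik.
by move: kj j0; case: k j => [[|[|[|?]]] ?] [[|[|[|?]]] ?].
Qed.

Lemma span_square : exists Y' (f' : Hom X' Y') (w' : Hom Y Y'),
  [/\ W _ _ w', ccomp f' w = ccomp w' f & (k = ord_max -> W _ _ f')].
Proof.
have hD := diagram_comap (okP := fun a => a <> Ltop k) (okQ := fun _ => True) (leP := @Lrel 2 k)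
  (fun _ _ => I) span_vertex_of_mono (span_diagram w f).
have hM : marked_on (@Lrel 2 k) W (@Lmk 2 k) (fun a => a <> Ltop k)
    (fun a b => span_arr w f (span_vertex_of a) (span_vertex_of b)).
  exact: span_vertex_of_marked.
have [Ob' [E' [hD' hM' hE']]] := hext hD hM.
have mem0k : k \in [set ord0; k] by rewrite !inE eqxx orbT.
have memkj : k \in [set k; j] by rewrite !inE eqxx.
have o_k : ord0 \notin [set k] by rewrite inE eq_sym.
have j_k : j \notin [set k] by rewrite inE eq_sym.
have j_0k : j \notin [set ord0; k] by rewrite !inE negb_or j0 eq_sym.
have o_kj : ord0 \notin [set k; j] by rewrite !inE negb_or !(eq_sym ord0) k0.
pose v1 := Lsingle k; pose v0k := Lvert_of mem0k; pose vkj := Lvert_of memkj.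
have s1 : Lrel v1 v0k by rewrite /Lrel /= sub1set mem0k.
have s2 : Lrel v1 vkj by rewrite /Lrel /= sub1set memkj.
have ntop (a : Lvert k) i : i \notin proj1_sig a -> a <> Ltop k by move/Lvert_ntop/eqP.
have e1 : E' v1 v0k = mkArr w.
  rewrite hE'; [|exact: (ntop v1 _ o_k)|exact: (ntop v0k _ j_0k)|exact: s1].
  by rewrite /span_vertex_of /= (negbTE o_k) (negbTE j_k) !inE eqxx.
have e2 : E' v1 vkj = mkArr f.
  rewrite hE'; [|exact: (ntop v1 _ o_k)|exact: (ntop vkj _ o_kj)|exact: s2].
  by rewrite /span_vertex_of /= (negbTE o_k) (negbTE j_k) (negbTE o_kj) !inE eqxx orbT.
have T1 := diagram_comp hD' I I I s1 (Lrel_top_r v0k).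
have T2 := diagram_comp hD' I I I s2 (Lrel_top_r vkj).
rewrite e1 in T1; rewrite e2 in T2.
have [c [p1 [p2 [ep1 ep2 comm]]]] := Acomp_square T1 T2.
exists c, p1, p2; split => //.
- have := hM' vkj (Ltop k) I I (Lrel_top_r vkj); rewrite ep2; apply.
  by rewrite /Lmk !setmax_top // ?inE //; case/or3P: (I3_cases ord_max) => // ->; rewrite ?orbT.
- move=> kmax; have := hM' v0k (Ltop k) I I (Lrel_top_r v0k); rewrite ep1; apply.
  by rewrite /Lmk !setmax_top // !inE kmax eqxx orbT.
Qed.

End SpanFromLifting.

Inductive fork_vertex := ForkRoot | ForkLeft | ForkRight | ForkJoin | ForkTip.

Definition fork_le : rel fork_vertex := fun s t =>
  match s, t with
  | ForkRoot, _ | ForkLeft, (ForkLeft | ForkJoin | ForkTip)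
  | ForkRight, (ForkRight | ForkJoin | ForkTip)
  | ForkJoin, ForkJoin | ForkTip, ForkTip => true
  | _, _ => false
  end.

Section ForkDiagram.
Variables (C : category) (X' X Y : Obj C) (w : Hom X' X) (f g : Hom X Y).
Hypothesis fw_gw : ccomp f w = ccomp g w.

Definition fork_obj s := match s with ForkRoot => X' | ForkTip => Y | _ => X end.

Definition fork_arr s t : Arr C :=
  match s, t with
  | ForkRoot, ForkRoot => mkArr (cid X')
  | ForkRoot, (ForkLeft | ForkRight | ForkJoin) => mkArr w
  | ForkRoot, ForkTip => mkArr (ccomp f w)
  | ForkLeft, ForkTip => mkArr f
  | ForkRight, ForkTip => mkArr g
  | ForkTip, ForkTip => mkArr (cid Y)
  | (ForkLeft | ForkRight | ForkJoin), _ => mkArr (cid X)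
  | _, _ => mkArr (cid X')
  end.

Lemma fork_diagram : diagram_on fork_le (fun _ => True) fork_obj fork_arr.
Proof.
split; [by case; case | by case; case | by case |].
case; case; case => //= *;
  first [apply: Acomp_idl | apply: Acomp_idr | apply: Acomp_mk | rewrite fw_gw; apply: Acomp_mk].
Qed.

End ForkDiagram.

Section ForkFromLifting.
Variables (C : category) (W : cmarking C).
Arguments W : clear implicits.
Variable HW : forall x, W x x (cid x).
Let q1 : 'I_4 := @Ordinal 4 1 isT.
Let q2 : 'I_4 := @Ordinal 4 2 isT.
Hypothesis hext : extendable (@Lrel 3 q1) W (@Lmk 3 q1) (Ltop q1).
Variables (X' X Y : Obj C) (w : Hom X' X) (f g : Hom X Y).
Hypothesis fw_gw : ccomp f w = ccomp g w.
Hypothesis Ww : W _ _ w.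

Lemma I4_cases (i : 'I_4) : [\/ i = ord0, i = q1, i = q2 | i = ord_max].
Proof.
by case: i => [[|[|[|[|?]]]] ?]; [apply: Or41 | apply: Or42 | apply: Or43 | apply: Or44 | by []];
  apply: val_inj.
Qed.

(* Both copies of X reach the top through the vertex {0,1,2}, by identities; this is
   what forces v f = v g in any extension. *)
Definition fork_vertex_of (a : Lvert q1) : fork_vertex :=
  if ord_max \in proj1_sig a then ForkTip
  else if (ord0 \in proj1_sig a) && (q2 \in proj1_sig a) then ForkJoin
  else if ord0 \in proj1_sig a then ForkLeft
  else if q2 \in proj1_sig a then ForkRight else ForkRoot.

Lemma fork_vertex_of_mono a b : a <> Ltop q1 -> b <> Ltop q1 -> Lrel a b ->
  fork_le (fork_vertex_of a) (fork_vertex_of b).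
Proof.
move=> _ nb hab.
have sub i : i \in proj1_sig a -> i \in proj1_sig b := subsetP hab i.
have nb' : ~~ [&& ord0 \in proj1_sig b, q2 \in proj1_sig b & ord_max \in proj1_sig b].
  apply/negP => /and3P [b0 b2 b3]; apply: nb; apply: Lvert_top.
  by move=> i; case: (I4_cases i) => ->; rewrite ?(proj2_sig b).
move: (sub ord0) (sub q2) (sub ord_max) nb'; rewrite /fork_vertex_of.
case: (ord0 \in proj1_sig a); case: (q2 \in proj1_sig a); case: (ord_max \in proj1_sig a);
case: (ord0 \in proj1_sig b); case: (q2 \in proj1_sig b); case: (ord_max \in proj1_sig b) => //=;
by move=> H0 H2 H3; rewrite ?H0 ?H2 ?H3.
Qed.

Lemma fork_vertex_of_marked a b : a <> Ltop q1 -> b <> Ltop q1 -> Lrel a b -> Lmk a b ->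
  WA W (fork_arr w f g (fork_vertex_of a) (fork_vertex_of b)).
Proof.
move=> _ _ hab hm.
have tip_ab : fork_vertex_of b = ForkTip -> fork_vertex_of a = ForkTip.
  have b3 : fork_vertex_of b = ForkTip -> ord_max \in proj1_sig b.
    by rewrite /fork_vertex_of; case: ifP => //; case: ifP => //; case: ifP => //; case: ifP.
  move=> /b3 hb3; rewrite /fork_vertex_of (setmax_topP (proj2_sig a)) //.
  by rewrite hm setmax_top.
case Ea: (fork_vertex_of a); case Eb: (fork_vertex_of b); try exact: HW; try exact: Ww;
  by have := tip_ab Eb; rewrite Ea.
Qed.

Lemma fork_cancel : exists Y' (v : Hom Y Y'), W _ _ v /\ ccomp v f = ccomp v g.
Proof.
have hD := diagram_comap (okP := fun a => a <> Ltop q1) (okQ := fun _ => True) (leP := @Lrel 3 q1)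
  (fun _ _ => I) fork_vertex_of_mono (fork_diagram fw_gw).
have [Ob' [E' [hD' hM' hE']]] := hext hD fork_vertex_of_marked.
pose v l (h : 1 \in l) : Lvert q1 := Lvert_seq (k := q1) h.
have tri l1 l2 h1 h2 (i1 i2 : 'I_4) : val i1 \notin l1 -> val i2 \notin l2 -> all (mem l2) l1 ->
    Acomp (fork_arr w f g (fork_vertex_of (v l1 h1)) (fork_vertex_of (v l2 h2)))
          (E' (v l2 h2) (Ltop q1)) (E' (v l1 h1) (Ltop q1)).
  move=> n1 n2 hl; rewrite -hE'; last exact: Lrel_seq.
  - by apply: (diagram_comp hD') => //; [apply: Lrel_seq | apply: Lrel_top_r].
  - by apply/eqP; apply: (@Lvert_ntop _ _ _ i1); rewrite Lvert_seq_mem.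
  - by apply/eqP; apply: (@Lvert_ntop _ _ _ i2); rewrite Lvert_seq_mem.
have T1 := tri [:: 1; 3] [:: 0; 1; 3] isT isT ord0 q2 isT isT isT.
have T2 := tri [:: 1; 3] [:: 1; 2; 3] isT isT ord0 ord0 isT isT isT.
have T3 := tri [:: 0; 1] [:: 0; 1; 3] isT isT q2 q2 isT isT isT.
have T4 := tri [:: 1; 2] [:: 1; 2; 3] isT isT ord0 ord0 isT isT isT.
have T5 := tri [:: 0; 1] [:: 0; 1; 2] isT isT q2 ord_max isT isT isT.
have T6 := tri [:: 1; 2] [:: 0; 1; 2] isT isT ord0 ord_max isT isT isT.
rewrite /fork_vertex_of !Lvert_seq_mem /= in T1 T2 T3 T4 T5 T6.
rewrite (Acomp_idl_inv T1) in T3; rewrite (Acomp_idl_inv T2) -(Acomp_idl_inv T6) in T4.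
rewrite (Acomp_idl_inv T5) in T4.
have [c [h1 [h2 [e1 e2 comm]]]] := Acomp_square T3 T4.
rewrite e1 in e2; have e12 := mkArr_inj e2; subst h2.
exists c, h1; split => //.
have := hM' (v [:: 1; 3] isT) (Ltop q1) I I (Lrel_top_r _); rewrite e1; apply.
by rewrite /Lmk !setmax_top // Lvert_seq_mem.
Qed.

End ForkFromLifting.

Lemma CLF_of_proper_left (C : category) (W : cmarking C) (HW : forall x, W x x (cid x)) :
  proper_left W -> CLF (marked_nerve HW).
Proof.
move=> HPL; split; first by apply/weakly_closed_iff; case: HPL.
by move=> n k n2 kpos; apply/rlp_LJ_iff; [apply: leq_trans n2 | apply: left_extendable].
Qed.

Lemma proper_left_of_CLF (C : category) (W : cmarking C) (HW : forall x, W x x (cid x)) :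
  CLF (marked_nerve HW) -> proper_left W.
Proof.
case=> wc hrlp.
have ext n (k : 'I_n.+1) : 2 <= n -> 0 < k -> extendable (@Lrel n k) W (@Lmk n k) (Ltop k).
  by move=> n2 kpos; apply/rlp_LJ_iff; [apply: leq_trans n2 | apply: hrlp].
pose k1 : 'I_3 := @Ordinal 3 1 isT.
have k1_max : k1 <> ord_max by move/(congr1 val).
split.
- exact/weakly_closed_iff.
- exact: HW.
- move=> X Y X' f w Ww; case: (classic (W _ _ f)) => [Wf | nWf].
  + have [Y' [f' [w' [Ww' comm Wf']]]] :=
      span_square HW (k := ord_max) (j := k1) isT isT isT (ext 2 ord_max isT isT) Ww (fun _ => Wf).
    by exists Y', f', w'; split => // _; apply: Wf'.
  + have [Y' [f' [w' [Ww' comm _]]]] :=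
      span_square HW (k := k1) (j := ord_max) isT isT isT (ext 2 k1 isT isT) (f := f) Ww
        (fun e => False_ind _ (k1_max e)).
    by exists Y', f', w'; split => // /nWf.
- move=> X Y f g [X' [w [Ww e]]].
  exact: (fork_cancel HW (ext 3 (@Ordinal 4 1 isT) isT isT) e Ww).
Qed.

Theorem proper_left_iff_CLF (C : category) (W : cmarking C) (HW : forall x, W x x (cid x)) :
  proper_left W <-> CLF (marked_nerve HW).
Proof. by split; [apply: CLF_of_proper_left | apply: proper_left_of_CLF]. Qed.

Theorem proper_right_iff_CRF (C : category) (W : cmarking C) (HW : forall x, W x x (cid x)) :
  proper_right W <-> CRF (marked_nerve HW).
Proof.
rewrite /proper_right (proper_left_iff_CLF (C := op_category C) (W := op_marking W) HW).
have wc_op : weakly_closed (marked_nerve (C := op_category C) (W := op_marking W) HW) <->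
             weakly_closed (marked_nerve HW).
  by rewrite !weakly_closed_iff comp_closed_op.
split=> -[wc hrlp]; split; try exact/wc_op.
- move=> n k n2 kn; apply/rlp_RJ_iff; first exact: leq_trans n2.
  apply/extendable_R_iff_L_op/rlp_LJ_iff; first exact: leq_trans n2.
  by apply: hrlp => //=; rewrite subn_gt0.
- move=> n k n2 kpos; apply/rlp_LJ_iff; first exact: leq_trans n2.
  rewrite -[k]rev_ordK; apply/extendable_R_iff_L_op/rlp_RJ_iff; first exact: leq_trans n2.
  by apply: hrlp => //=; rewrite subSS; lia.
Qed.

Theorem theorem5p2 (C : category) (W : cmarking C)
  (HW : forall x : Obj C, W x x (cid x)) :
  (proper_left W <-> CLF (marked_nerve HW)) /\
  (proper_right W <-> CRF (marked_nerve HW)).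
Proof. by split; [apply: proper_left_iff_CLF | apply: proper_right_iff_CRF]. Qed.
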